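(* For every $t \in \mathbb{N}_0$ and every integer $b \ge 3$, the cyclotomic polynomial $\Phi_b(x)$ does not divide \begin{align*} T_t(x) = {}& x^{8t+27} + x^{8t+26} + x^{8t+25} + x^{8t+22} + x^{8t+20} + x^{8t+18} + x^{8t+17} - x^{8t+16} - x^{8t+15} + 2x^{6t+15} \\ & - x^{4t+26} - x^{4t+25} + x^{4t+23} - x^{4t+21} - x^{4t+20} + x^{4t+19} - x^{4t+18} - x^{4t+17} + 3x^{4t+14} - 3x^{4t+13} \\ & + x^{4t+10} + x^{4t+9} - x^{4t+8} + x^{4t+7} + x^{4t+6} - x^{4t+4} + x^{4t+2} + x^{4t+1} - 2x^{2t+12} \\ & + x^{12} + x^{11} - x^{10} - x^9 - x^7 - x^5 - x^2 - x - 1. \end{align*}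
   Context: $\Phi_b(x) = \prod_\zeta (x-\zeta)$, where $\zeta$ ranges over the primitive $b$-th roots of unity, is the $b$-th cyclotomic polynomial. *)

From HB Require Import structures.
From mathcomp Require Import all_boot all_order all_algebra all_field.
Set Implicit Arguments. Unset Strict Implicit. Unset Printing Implicit Defensive.
Import GRing.Theory.
Local Open Scope ring_scope.

Definition Tpoly (t : nat) : {poly int} :=
    'X^(8*t+27) + 'X^(8*t+26) + 'X^(8*t+25) + 'X^(8*t+22) + 'X^(8*t+20)
  + 'X^(8*t+18) + 'X^(8*t+17) - 'X^(8*t+16) - 'X^(8*t+15) + 2 * 'X^(6*t+15)
  - 'X^(4*t+26) - 'X^(4*t+25) + 'X^(4*t+23) - 'X^(4*t+21) - 'X^(4*t+20)
  + 'X^(4*t+19) - 'X^(4*t+18) - 'X^(4*t+17) + 3 * 'X^(4*t+14) - 3 * 'X^(4*t+13)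
  + 'X^(4*t+10) + 'X^(4*t+9) - 'X^(4*t+8) + 'X^(4*t+7) + 'X^(4*t+6)
  - 'X^(4*t+4) + 'X^(4*t+2) + 'X^(4*t+1) - 2 * 'X^(2*t+12)
  + 'X^12 + 'X^11 - 'X^10 - 'X^9 - 'X^7 - 'X^5 - 'X^2 - 'X - 1.

(* Write T_t(x) = T(x, x^(2t)) for a fixed bivariate integer polynomial T.
   If Phi_b divides T_t, then T(z, z^(2t)) = 0 for every primitive b-th root of
   unity z.  Depending on b mod 4, some z' in {z^2, -z^2, -z} is again a primitive
   b-th root, with z'^(2t) equal to (z^(2t))^2 or z^(2t); so y = z^(2t) is a
   common root of T(z, y) and a second polynomial Q(z, y).  An explicit
   combination U T + V Q = x^k (x-1)^a (x+1)^c S(x) eliminates y, hence S(z) = 0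
   for all primitive b-th roots z (for 4 | b, S(z^2) = 0, i.e. S vanishes at all
   primitive b/2-th roots).  Finally S and S o z' are coprime modulo 101: a
   combination of them is congruent to 1 mod 101, so a common root, which is an
   algebraic integer, would make 1/101 an algebraic integer. *)

From Stdlib Require Import ZArith.
From HB Require Import structures.
From mathcomp Require Import all_boot all_order all_algebra all_field.
From mathcomp Require Import ssrZ zify ring.

Set Implicit Arguments.
Unset Strict Implicit.
Unset Printing Implicit Defensive.

Import GRing.Theory Num.Theory.
Local Open Scope ring_scope.

(* Polynomials are little-endian coefficient lists with executable arithmetic, so that
   identities between explicit integer polynomials can be checked by [vm_compute]. *)
Section ListPolynomial.
Variables (A : Type) (add mul : A -> A -> A) (opp : A -> A) (zero : A).

Fixpoint lpadd (p q : seq A) : seq A :=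
  match p, q with
  | [::], _ => q
  | _, [::] => p
  | a :: p', b :: q' => add a b :: lpadd p' q'
  end.

Definition lpscale (c : A) (p : seq A) : seq A := map (mul c) p.
Definition lpopp (p : seq A) : seq A := map opp p.
Definition lpsub (p q : seq A) : seq A := lpadd p (lpopp q).

Fixpoint lpmul (p q : seq A) : seq A :=
  if p is a :: p' then lpadd (lpscale a q) (zero :: lpmul p' q) else [::].

Fixpoint lpcomp_sqr (p : seq A) : seq A :=
  if p is a :: p' then a :: zero :: lpcomp_sqr p' else [::].

Fixpoint lpcomp_opp (p : seq A) : seq A :=
  if p is a :: p' then a :: lpopp (lpcomp_opp p') else [::].

Variables (R : comPzRingType) (e : A -> R).

Definition lpeval (x : R) (p : seq A) : R := foldr (fun a v => e a + x * v) 0 p.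

Hypotheses (eD : forall a b, e (add a b) = e a + e b)
  (eM : forall a b, e (mul a b) = e a * e b)
  (eN : forall a, e (opp a) = - e a) (e0 : e zero = 0).

Lemma lpevalD x p q : lpeval x (lpadd p q) = lpeval x p + lpeval x q.
Proof.
elim: p q => [|a p IHp] [|b q] /=; rewrite ?add0r ?addr0 // IHp eD; ring.
Qed.

Lemma lpevalZ x c p : lpeval x (lpscale c p) = e c * lpeval x p.
Proof. by elim: p => [|a p IHp] /=; rewrite ?mulr0 // IHp eM; ring. Qed.

Lemma lpevalN x p : lpeval x (lpopp p) = - lpeval x p.
Proof. by elim: p => [|a p IHp] /=; rewrite ?oppr0 // IHp eN; ring. Qed.

Lemma lpevalB x p q : lpeval x (lpsub p q) = lpeval x p - lpeval x q.
Proof. by rewrite lpevalD lpevalN. Qed.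

Lemma lpevalM x p q : lpeval x (lpmul p q) = lpeval x p * lpeval x q.
Proof.
elim: p => [|a p IHp] /=; first by rewrite mul0r.
by rewrite lpevalD lpevalZ /= IHp e0; ring.
Qed.

Lemma lpeval_comp_sqr x p : lpeval x (lpcomp_sqr p) = lpeval (x ^+ 2) p.
Proof. by elim: p => [|a p IHp] //=; rewrite IHp e0; ring. Qed.

Lemma lpeval_comp_opp x p : lpeval x (lpcomp_opp p) = lpeval (- x) p.
Proof. by elim: p => [|a p IHp] //=; rewrite lpevalN IHp; ring. Qed.

Lemma lpeval_all0 (is0 : pred A) x p :
  (forall a, is0 a -> e a = 0) -> all is0 p -> lpeval x p = 0.
Proof.
move=> e_is0; elim: p => [|a p IHp] //= /andP[/e_is0 -> /IHp ->]; ring.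
Qed.

End ListPolynomial.

Lemma lpeval_map (A B : Type) (R : comPzRingType) (f : A -> B) (e : B -> R) (e' : A -> R) x p :
  (forall a, e (f a) = e' a) -> lpeval e x (map f p) = lpeval e' x p.
Proof. by move=> efe'; elim: p => [|a p IHp] //=; rewrite IHp efe'. Qed.

Definition zpoly := seq Z.

Definition zp_add : zpoly -> zpoly -> zpoly := lpadd Z.add.
Definition zp_opp : zpoly -> zpoly := lpopp Z.opp.
Definition zp_sub : zpoly -> zpoly -> zpoly := lpsub Z.add Z.opp.
Definition zp_mul : zpoly -> zpoly -> zpoly := lpmul Z.add Z.mul Z0.
Definition zp_expn (n : nat) (p : zpoly) : zpoly := iter n (zp_mul p) [:: Z.one].
Definition zp_comp_sqr : zpoly -> zpoly := lpcomp_sqr Z0.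
Definition zp_comp_opp : zpoly -> zpoly := lpcomp_opp Z.opp.

(* Bivariate polynomials in (x, y), as polynomials in y over Z[x]. *)
Definition zp2_add : seq zpoly -> seq zpoly -> seq zpoly := lpadd zp_add.
Definition zp2_sub : seq zpoly -> seq zpoly -> seq zpoly := lpsub zp_add zp_opp.
Definition zp2_mul : seq zpoly -> seq zpoly -> seq zpoly := lpmul zp_add zp_mul [::].
Definition zp2_comp_sqr (P : seq zpoly) : seq zpoly := lpcomp_sqr [::] (map zp_comp_sqr P).
Definition zp2_comp_oppsqr (P : seq zpoly) : seq zpoly :=
  lpcomp_sqr [::] (map (zp_comp_sqr \o zp_comp_opp) P).
Definition zp2_comp_opp (P : seq zpoly) : seq zpoly := map zp_comp_opp P.

Section Evaluation.
Variable R : comPzRingType.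

Definition zintr (c : Z) : R := (int_of_Z c)%:~R.

Lemma zintrD a b : zintr (Z.add a b) = zintr a + zintr b.
Proof. by rewrite /zintr -intrD -rmorphD. Qed.
Lemma zintrM a b : zintr (Z.mul a b) = zintr a * zintr b.
Proof. by rewrite /zintr -intrM -rmorphM. Qed.
Lemma zintrN a : zintr (Z.opp a) = - zintr a.
Proof. by rewrite /zintr -intrN -rmorphN. Qed.
Lemma zintr0 : zintr Z0 = 0. Proof. by []. Qed.
Lemma zintr1 : zintr Z.one = 1. Proof. by []. Qed.
Lemma zintrN1 : zintr (Zneg xH) = -1. Proof. by []. Qed.
Lemma zintr_pos p : zintr (Zpos p) = (Pos.to_nat p)%:R.
Proof. by rewrite /zintr /= pmulrn. Qed.
Lemma zintr_neg p : zintr (Zneg p) = - (Pos.to_nat p)%:R.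
Proof. by rewrite -[Zneg p]/(Z.opp (Zpos p)) zintrN zintr_pos. Qed.

Definition zp_eval (x : R) : zpoly -> R := lpeval zintr x.
Definition zp2_eval (x y : R) : seq zpoly -> R := lpeval (zp_eval x) y.

Lemma zp_evalD x p q : zp_eval x (zp_add p q) = zp_eval x p + zp_eval x q.
Proof. exact: (lpevalD zintrD). Qed.
Lemma zp_evalN x p : zp_eval x (zp_opp p) = - zp_eval x p.
Proof. exact: (lpevalN zintrN). Qed.
Lemma zp_evalB x p q : zp_eval x (zp_sub p q) = zp_eval x p - zp_eval x q.
Proof. exact: (lpevalB zintrD zintrN). Qed.
Lemma zp_evalM x p q : zp_eval x (zp_mul p q) = zp_eval x p * zp_eval x q.
Proof. exact: (lpevalM zintrD zintrM zintr0). Qed.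
Lemma zp_evalX x n p : zp_eval x (zp_expn n p) = zp_eval x p ^+ n.
Proof.
elim: n => [|n IHn]; first by rewrite /zp_eval /= mulr0 addr0 expr0.
by rewrite /zp_expn iterS zp_evalM -/(zp_expn n p) IHn exprS.
Qed.
Lemma zp_eval_comp_sqr x p : zp_eval x (zp_comp_sqr p) = zp_eval (x ^+ 2) p.
Proof. exact: (lpeval_comp_sqr zintr0). Qed.
Lemma zp_eval_comp_opp x p : zp_eval x (zp_comp_opp p) = zp_eval (- x) p.
Proof. exact: (lpeval_comp_opp zintrN). Qed.

Lemma zp2_evalD x y P Q : zp2_eval x y (zp2_add P Q) = zp2_eval x y P + zp2_eval x y Q.
Proof. exact: (lpevalD (zp_evalD x)). Qed.
Lemma zp2_evalB x y P Q : zp2_eval x y (zp2_sub P Q) = zp2_eval x y P - zp2_eval x y Q.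
Proof. exact: (lpevalB (zp_evalD x) (zp_evalN x)). Qed.
Lemma zp2_evalM x y P Q : zp2_eval x y (zp2_mul P Q) = zp2_eval x y P * zp2_eval x y Q.
Proof. exact: (lpevalM (zp_evalD x) (zp_evalM x) (erefl : zp_eval x [::] = 0)). Qed.

Lemma zp2_eval_comp_sqr x y P : zp2_eval x y (zp2_comp_sqr P) = zp2_eval (x ^+ 2) (y ^+ 2) P.
Proof.
rewrite /zp2_eval (lpeval_comp_sqr (erefl : zp_eval x [::] = 0)).
exact/lpeval_map/zp_eval_comp_sqr.
Qed.
Lemma zp2_eval_comp_oppsqr x y P :
  zp2_eval x y (zp2_comp_oppsqr P) = zp2_eval (- x ^+ 2) (y ^+ 2) P.
Proof.
rewrite /zp2_eval (lpeval_comp_sqr (erefl : zp_eval x [::] = 0)).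
by apply: lpeval_map => c; rewrite /= zp_eval_comp_sqr zp_eval_comp_opp.
Qed.
Lemma zp2_eval_comp_opp x y P : zp2_eval x y (zp2_comp_opp P) = zp2_eval (- x) y P.
Proof. exact/lpeval_map/zp_eval_comp_opp. Qed.

End Evaluation.

Definition cofactor (k a c : nat) : zpoly :=
  zp_mul (zp_expn k [:: Z0; Z.one])
    (zp_mul (zp_expn a [:: Z.opp Z.one; Z.one]) (zp_expn c [:: Z.one; Z.one])).

Lemma zp_eval_cofactor (R : comPzRingType) (x : R) k a c :
  zp_eval x (cofactor k a c) = x ^+ k * ((x - 1) ^+ a * (x + 1) ^+ c).
Proof.
rewrite !zp_evalM !zp_evalX /zp_eval /= zintr0 zintr1 zintrN1 !mulr0 !addr0 mulr1 add0r.
by rewrite (addrC (-1)) (addrC 1).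
Qed.

Definition elim_identity (P Q U V : seq zpoly) (k a c : nat) (S : zpoly) : bool :=
  all (all (Z.eqb Z0))
    (zp2_sub (zp2_add (zp2_mul U P) (zp2_mul V Q)) [:: zp_mul (cofactor k a c) S]).

Lemma elim_identity_root (R : idomainType) P Q U V k a c S (x y : R) :
  elim_identity P Q U V k a c S -> zp2_eval x y P = 0 -> zp2_eval x y Q = 0 ->
  [&& x != 0, x != 1 & x != -1] -> zp_eval x S = 0.
Proof.
move=> elimPQ Px Qx /and3P[x_neq0 x_neq1 x_neqN1].
have cofactor_neq0 : zp_eval x (cofactor k a c) != 0.
  rewrite zp_eval_cofactor !mulf_neq0 ?expf_neq0 //.
    by rewrite subr_eq0.
  by rewrite -(opprK 1) subr_eq0.
have : zp2_eval x y (zp2_sub (zp2_add (zp2_mul U P) (zp2_mul V Q))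
                  [:: zp_mul (cofactor k a c) S]) = 0.
  apply: lpeval_all0 elimPQ => p p0; apply: lpeval_all0 p0 => c0 /Z.eqb_eq <-.
  exact: zintr0.
rewrite zp2_evalB zp2_evalD !zp2_evalM Px Qx !mulr0 add0r /zp2_eval /= mulr0 addr0.
rewrite sub0r => /eqP; rewrite oppr_eq0 zp_evalM mulf_eq0 (negbTE cofactor_neq0).
by move/eqP.
Qed.

Lemma Aint_intrV (n : int) : n != 0 -> (n%:~R : algC)^-1 \in Aint -> `|n|%N = 1%N.
Proof.
move=> n_neq0 /Cint_rat_Aint; rewrite rpredV rpred_int => /(_ isT) /intrP[m em].
have /eqP : (n * m)%:~R = 1%:~R :> algC by rewrite intrM -em divff // intr_eq0.
rewrite eqr_int => /eqP nm1.
by apply/eqP; rewrite -dvdz1; apply/dvdzP; exists m; rewrite mulrC nm1.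
Qed.

Definition zp_dvd (d : Z) (p : zpoly) : bool := all (fun c => Z.eqb (Z.modulo c d) Z0) p.

Lemma zp_eval_dvd (R : comPzRingType) (x : R) d p :
  zp_dvd d p -> zp_eval x p = zintr R d * zp_eval x (map (Z.div ^~ d) p).
Proof.
elim: p => [|c p IHp] /=; first by rewrite /zp_eval /= mulr0.
move=> /andP[/Z.eqb_eq c_mod /IHp]; rewrite /zp_eval /= => ->.
rewrite {1}(Z_div_mod_eq_full c d) c_mod Z.add_0_r zintrM; ring.
Qed.

Lemma zp_eval_Aint (x : algC) p : x \in Aint -> zp_eval x p \in Aint.
Proof.
move=> x_Aint; elim: p => [|c p IHp]; first exact: Aint0.
by rewrite /zp_eval /= rpredD ?rpredM ?Aint_int.
Qed.

Definition coprime_mod (d : Z) (S1 S2 U V : zpoly) : bool :=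
  zp_dvd d (zp_sub (zp_add (zp_mul U S1) (zp_mul V S2)) [:: Z.one]).

Lemma coprime_mod_no_common_root d S1 S2 U V (x : algC) :
  (1 < Z.abs_nat d)%N -> coprime_mod d S1 S2 U V -> x \in Aint ->
  zp_eval x S1 = 0 -> zp_eval x S2 = 0 -> False.
Proof.
move=> d_gt1 /(zp_eval_dvd x); rewrite zp_evalB zp_evalD !zp_evalM => + x_Aint S1x S2x.
rewrite S1x S2x !mulr0 add0r /zp_eval /= mulr0 addr0 zintr1 -/(zp_eval x _).
set w := zp_eval x _ => dw.
have d_neq0 : int_of_Z d != 0 by apply/eqP => d0; move: d_gt1; rewrite -[d]int_of_ZK d0.
suff : `|int_of_Z d|%N = 1%N by lia.
apply: Aint_intrV => //.
have -> : (int_of_Z d)%:~R^-1 = - w :> algC.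
  apply: (mulfI (_ : (int_of_Z d)%:~R != 0)); first by rewrite intr_eq0.
  by rewrite divff ?intr_eq0 // mulrN -[_ * w]/(zintr _ d * w) -dw sub0r opprK.
by rewrite rpredN zp_eval_Aint.
Qed.

Lemma coprime_addn_double m j : odd (m + j) -> coprime j m -> coprime (m + j) (2 * m).
Proof.
move=> odd_mj co_jm; rewrite coprimeMr coprimen2 odd_mj coprime_sym.
by rewrite /coprime gcdnDl -/(coprime m j) coprime_sym.
Qed.

Section PrimitiveRoots.
Variable R : idomainType.

Lemma prim_root_half_expr m (z : R) : (2 * m).-primitive_root z -> z ^+ m = -1.
Proof.
move=> prim_z; have m_gt0 : (0 < m)%N by have := prim_order_gt0 prim_z; lia.
have : (z ^+ m) ^+ 2 = 1 by rewrite -exprM mulnC prim_expr_order.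
move/eqP; rewrite sqrf_eq1 => /orP[|/eqP //].
by rewrite -(prim_order_dvd prim_z) => /dvdn_leq; lia.
Qed.

Lemma prim_root_sqr n (z : R) : odd n -> n.-primitive_root z -> n.-primitive_root (z ^+ 2).
Proof. by move=> odd_n prim_z; rewrite prim_root_exp_coprime // coprime2n. Qed.

Lemma prim_root_opp_sqr m (z : R) :
  odd m -> (2 * m).-primitive_root z -> (2 * m).-primitive_root (- z ^+ 2).
Proof.
move=> odd_m prim_z; rewrite -mulN1r -(prim_root_half_expr prim_z) -exprD.
by rewrite prim_root_exp_coprime // coprime_addn_double ?oddD ?odd_m ?coprime2n.
Qed.

Lemma prim_root_opp m (z : R) :
  ~~ odd m -> (2 * m).-primitive_root z -> (2 * m).-primitive_root (- z).
Proof.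
move=> even_m prim_z; rewrite -mulN1r -(prim_root_half_expr prim_z) -{2}(expr1 z) -exprD.
by rewrite prim_root_exp_coprime // coprime_addn_double ?oddD ?(negbTE even_m) ?coprime1n.
Qed.

Lemma prim_root_nondegenerate n (z : R) : (2 < n)%N ->
  n.-primitive_root z -> [&& z != 0, z != 1 & z != -1].
Proof.
move=> n_gt2 prim_z; apply/and3P; split.
- by rewrite (prim_root_eq0 prim_z); lia.
- apply: contraTneq n_gt2 => z1.
  by have := prim_order_dvd prim_z 1; rewrite z1 expr1n eqxx dvdn1 => /eqP ->.
- apply: contraTneq n_gt2 => zN1.
  have := prim_order_dvd prim_z 2; rewrite zN1 sqrrN expr1n eqxx => /dvdn_leq.
  by move=> /(_ isT); rewrite -leqNgt.
Qed.

End PrimitiveRoots.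

Lemma prim_root_sqr_surj (F : fieldType) m (z w : F) : ~~ odd m ->
  (2 * m).-primitive_root z -> m.-primitive_root w ->
  exists2 u, (2 * m).-primitive_root u & w = u ^+ 2.
Proof.
move=> even_m prim_z prim_w.
have prim_z2 : m.-primitive_root (z ^+ 2).
  have := dvdn_prim_root prim_z (dvdn_mull 2 (dvdnn m)).
  by rewrite mulnK // (prim_order_gt0 prim_w).
have [i w_eq] := prim_rootP prim_z2 (prim_expr_order prim_w).
have co_im : coprime i m by rewrite -(prim_root_exp_coprime _ prim_z2) -w_eq.
exists (z ^+ i); last by rewrite w_eq exprAC.
rewrite prim_root_exp_coprime // coprimeMr co_im andbT.
by apply: coprime_dvdr co_im; rewrite dvdn2.
Qed.

Lemma root_dvd_Cyclotomic (p : {poly int}) n (z : algC) :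
  'Phi_n %| p -> n.-primitive_root z -> root (map_poly intr p) z.
Proof.
move=> /(Pdiv.IdomainMonic.dvdpP (Cyclotomic_monic n))[q ->] prim_z.
by rewrite rmorphM /= rootM (Cintr_Cyclotomic prim_z) (root_cyclotomic prim_z) prim_z orbT.
Qed.

Section BivariateForm.
Local Open Scope Z_scope.

Definition Tbiv : seq zpoly :=
  [:: [:: -1; -1; -1; 0; 0; -1; 0; -1; 0; -1; -1; 1; 1];
      ncons 12%N 0 [:: -2];
      [:: 0; 1; 1; 0; -1; 0; 1; 1; -1; 1; 1; 0; 0; -3; 3; 0; 0; -1; -1; 1; -1; -1; 0; 1; 0; -1; -1];
      ncons 15%N 0 [:: 2];
      ncons 15%N 0 [:: -1; -1; 1; 1; 0; 1; 0; 1; 0; 0; 1; 1; 1]].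

End BivariateForm.

Lemma horner_Tpoly (R : comNzRingType) (x : R) t :
  (map_poly intr (Tpoly t)).[x] = zp2_eval x (x ^+ (2 * t)) Tbiv.
Proof.
set y := x ^+ (2 * t).
have powE j e : x ^+ (2 * j * t + e) = y ^+ j * x ^+ e.
  by rewrite exprD mulnAC exprM.
have hX n : (map_poly (intr : int -> R) 'X^n).[x] = x ^+ n.
  by rewrite map_polyXn hornerXn.
have hX1 : (map_poly (intr : int -> R) 'X).[x] = x by rewrite map_polyX hornerX.
rewrite /Tpoly ?mulr_natl ?rmorphD ?rmorphN ?rmorphMn ?rmorph1 ?hornerD ?hornerN.
rewrite ?hornerMn ?hX ?hornerC hX1.
rewrite -[(8 * t)%N]/(2 * 4 * t)%N -[(6 * t)%N]/(2 * 3 * t)%N.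
rewrite -[(4 * t)%N]/(2 * 2 * t)%N -[(2 * t)%N]/(2 * 1 * t)%N.
rewrite !powE /zp2_eval /zp_eval /lpeval /Tbiv /= ?zintr0 ?zintr_pos ?zintr_neg.
cbv [Pos.to_nat Pos.iter_op Nat.add].
ring.
Qed.

Lemma Tbiv_prim_root t n (z : algC) :
  'Phi_n %| Tpoly t -> n.-primitive_root z -> zp2_eval z (z ^+ (2 * t)) Tbiv = 0.
Proof. by move=> dvdT /(root_dvd_Cyclotomic dvdT)/eqP; rewrite horner_Tpoly. Qed.

Section Certificates.
Local Open Scope Z_scope.

(* The certificates below come from computer algebra; here they are only checked. *)

Definition elimU_odd : seq zpoly :=
  [:: (ncons 74%N 0 [:: -8; -40; -104; -200; -328; -544; -896; -1304; -1640; -1808; -1824; -1648;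
  -832; 656; 2408; 4056; 4752; 5352; 5432; 5296; 6720; 7880; 9600; 10008; 4960; 360; -8736; -14200;
  -3784; 2416; 24896; 28616; 18032; 18656; -20696; -20760; -7504; -12096; 57128; 17064; -20000;
  -14664; -217784; -102528; -173768; -108832; 181136; -132328; 176000; -104152; -276368; 77400;
  -472872; 179216; 310232; -44552; 669056; -574224; -386064; 130592; -1170568; 845912; -400056;
  73424; 1740384; -1664640; 750096; -1314112; -1082192; 2568064; -1635784; 1738632; 686592;
  -1253392; 2472360; -3510688; -1479168; 2510488; -1859304; 4283656; -1390296; -3378800; 6161216;
  -6166824; 2047648; -861800; -4048704; 13027208; -6432864; 1486784; 696184; -6133704; 10857344;
  -8519688; -2312424; 8622744; -2842800; 6324136; -5918056; -10647632; 15748168; -6516136; -1918496;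
  4541784; -11021968; 25148288; -13291168; -10946440; 12655232; -11714264; 20971512; -16498360;
  -10847408; 23615760; -9843664; 2304520; -10988464; -9644808; 28304720; -10506920; -16578048;
  11598904; -7043048; 24729888; -15958976; -26181440; 33585064; -10943384; 9551304; -15970632;
  -17383784; 44926584; -15500144; -10400312; -2996408; -6072664; 35220944; -19336648; -21421568;
  24355728; 1361288; 15663232; -19034328; -24710728; 38935520; -6428456; -3748280; -4177128;
  -11750896; 41134416; -17156344; -20025472; 8833288; -4902984; 27987256; -14477776; -17608400;
  25586344; -6518584; 3921648; -12518456; -16111256; 31143600; -7562936; -3986712; 517736;
  -11223688; 19951528; -13349912; -10823792; 11132232; -3371904; 12810008; -6185464; -12132952;
  12421768; -7275128; 1063608; 256144; -7522776; 15571152; -5402376; -3720352; 1978504; -7973168;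
  9406264; -3938776; -1841368; 6762608; -3186336; 4029232; -3073112; -3706256; 4602144; -1540192;
  1414488; 1622792; -2185912; 3390968; -2152840; -1717872; 1537848; -1878800; 2926544; -426840;
  -633008; 1514256; -1634168; 672808; -613048; -463448; 1426464; -317704; 395536; -101928; -575328;
  354136; -489696; -47448; 266040; -41784; 338408; -189560; -179368; 40072; -154296; 110488; -5896;
  27368; 116368; -56800; -36824; -92928; -65048; 16552; -8568; 3968; 936; -11888; -1256; -23568;
  -15928; 4976; 11648; 18032; 4576; -2480; -3832; -6464; -4680; -4200; -1480; 1800; 1720; 712; -440;
  128; 1768; 2384; 2264; 1864; 1536; 1072; 320; -256; -440; -400; -344; -320; -248; -136; -48; -8]);
  (ncons 84%N 0 [:: 16; 64; 128; 192; 288; 496; 784; 912; 800; 624; 336; -336; -1824; -3488; -4336;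
  -4624; -4320; -3456; -2416; -1280; -1984; -2928; -976; 1104; 7936; 16736; 21568; 21376; 5392;
  -9456; -12576; -20144; -9648; 7536; 13040; 31072; -13952; -35024; -16736; -49168; 34352; 57056;
  90304; 160704; -5120; -28640; -7584; -172464; 73552; -38336; -71536; 410128; -372352; 177120;
  -306032; -640064; 787568; -776560; 850176; 10064; -459696; 1411088; -1476336; 318640; -315888;
  -456512; 1760144; -728448; -608560; 779168; -1177904; 408256; -13040; -3244832; 4474320; -1197536;
  236896; 1504608; -6357184; 7633616; -3544256; -1404384; 2832448; -5299632; 9211088; -4936384;
  -5324336; 3670784; -2174912; 3830032; -1742480; -8049056; 9692464; 1496368; -7297696; 4698624;
  -11272144; 15569584; 1186064; -16097920; 14305472; -10797408; 14043824; -4221920; -19520352;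
  21607408; -4413984; 3798304; -3312000; -13894368; 22624256; 952224; -16007584; 8095520; -4257328;
  17190496; 2505952; -32184752; 24692448; -1456288; 2267696; 1353088; -30754688; 37926480; -2213600;
  -15408768; 4277200; -17573296; 33508208; -5030400; -28110496; 17022960; -1995520; 13844560;
  -6642640; -33418720; 28488912; 3779776; -9048608; 1133552; -24217408; 33195472; 290272; -26615632;
  10924976; -11643584; 24662528; -1508128; -28768752; 21541360; -3502512; 5082928; -1876592;
  -24762880; 26126112; 1126800; -6778208; 5104416; -15973792; 20152928; -1165360; -14249840;
  10680000; -5339840; 12654640; 1036432; -15003056; 10786736; -3019024; 735232; 3427120; -10391776;
  12294864; 149056; -5261248; 4296432; -9299392; 7703744; -98288; -4705728; 6980448; -4782816;
  4100032; -1624960; -5180080; 3688784; -2458736; 1804256; 1000400; -2245040; 2162144; -1625696;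
  -1726096; 799904; -1736528; 1966448; 448832; -923424; 1518544; -1866112; 350864; -346320; -763840;
  1695696; -563584; 861648; -83376; -607408; 401488; -757200; 396016; 210880; 195104; 454864;
  -218288; -14064; -127792; -170768; 117584; 24288; 162112; 133760; -84432; -28976; -157424; -48560;
  7952; 6096; 87040; 15168; 9808; -40304; -55488; -19888; -6336; 19680; 19376; 8064; -3200; -19136;
  -20544; -11200; -368; 9328; 8624; 5552; 1184; -2288; -2768; -1600; 1248; 2912; 2560; 960; -528;
  -1120; -976; -496; 112; 576; 720; 560; 288; 96; 16]); (ncons 75%N 0 [:: -8; -40; -96; -160; -232;
  -376; -640; -888; -944; -856; -760; -632; 32; 1272; 2160; 2416; 1976; 1704; 2104; 2392; 3904;
  6104; 6088; 6288; 1088; -5240; -8520; -11072; 4960; 16608; 17800; 19008; -4016; -12144; -15168;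
  -40360; 24248; 25408; 38024; 53912; -86368; -31984; -119704; -132080; 78808; -40368; 121456;
  105504; -287376; 134192; -366416; -128032; 375168; -465568; 902264; -213224; -245520; 424720;
  -1495720; 890400; -81528; -584960; 1637384; -1473264; 915472; 336928; -3246144; 2487168; -1741224;
  1090960; 3089384; -5085904; 4555816; -2188304; -1764920; 4015272; -7576496; 6588136; 1612480;
  -4639400; 5777200; -9312904; 3469056; 5477752; -12163488; 9878832; -3780128; 780184; 12440536;
  -23133928; 11569488; 1100448; -7518528; 19065416; -25589744; 16226184; 10018000; -21906544;
  16845080; -21989552; 11776536; 22664992; -33261272; 19486352; -3001712; -5680864; 27828728;
  -48093208; 21086328; 23074032; -27755728; 34634712; -46481688; 19508504; 35487040; -59763072;
  34417352; -21304968; 13434360; 42241816; -76265816; 32540344; 12362344; -21232176; 36097664;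
  -68399080; 35728208; 48301960; -66242440; 31830056; -40987848; 22037880; 57387936; -100771160;
  43665552; 8422160; -5841136; 45803248; -105401080; 51145504; 44353512; -51816920; 35653480;
  -64714128; 48565664; 56765184; -97512056; 33563280; -10351304; 19678312; 50768584; -107362464;
  47870432; 35022360; -28401456; 34151936; -83891640; 52233544; 53310616; -69363120; 29627848;
  -35712904; 34119464; 44553336; -89958640; 32869864; 8809704; 1597272; 31920240; -77114576;
  36692456; 29887784; -33550968; 20884704; -45920552; 30667544; 32622584; -50247376; 17568400;
  -14066120; 11837120; 23642056; -49069920; 17656720; 8922536; -5985720; 16480152; -35546952;
  14978704; 15667728; -18345984; 11965416; -17864376; 11226816; 14131112; -20221312; 8162176;
  -5171776; 3974128; 9423088; -14679032; 6236880; 3042872; -1849408; 5682288; -9192952; 3481384;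
  5080792; -4280712; 4294064; -4190680; 1914656; 3730736; -4624128; 2400896; -1576728; 877912;
  2248024; -2792064; 1237368; -341152; -303976; 725432; -1437400; 417512; 396288; -561152; 379912;
  -739136; -99888; 210664; -596912; 280736; -286656; 30352; 96328; -310528; 60920; -133632; -10504;
  47008; -45288; 56416; 23528; -35168; 20712; -25232; 30432; 36880; 8952; 47608; 14640; 26224;
  11552; 5744; 20048; 17984; 19528; 12768; 5848; 5584; 3568; 1648; 1152; 1016; 3480; 2736; 584;
  -896; -880; -8; -200; -776; -928; -776; -824; -1136; -1280; -1064; -760; -552; -424; -288; -144;
  -48; -8]); (ncons 85%N 0 [:: 16; 64; 128; 192; 272; 432; 656; 704; 496; 144; -416; -1216; -2656;
  -4000; -4256; -3936; -2288; 160; 2176; 3984; 1056; -1776; -704; -1072; 8928; 15696; 20656; 22960;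
  -5568; -20528; -29872; -42416; 5776; 15936; 51184; 75152; -42336; -8656; -83872; -80768; 75088;
  -10400; 219552; 160512; -126352; 56112; -367104; -117008; 161232; -290720; 733888; -119568; 19120;
  212240; -1188112; 515856; -578000; 241904; 1034592; -584736; 834544; -430208; -982048; 50080;
  -706032; 333104; 2004480; -1209136; 1077792; -66096; -2289808; 2241504; -4316160; 2317504;
  2141488; -1889936; 4031488; -5526096; 1742160; 936800; -3881376; 2298816; -1471360; 3378432;
  3722624; -5018720; -2990128; 2978160; -1899136; 3838720; -5913104; -1533792; 13274112; -7723024;
  414944; -8494208; 574688; 15152848; -12664560; -638448; 816016; 6515120; 6600224; -16592240;
  -5564336; 12885712; 5613712; -5262400; -8622912; -2616384; 23851680; -6844112; -18317040; 3742608;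
  4032272; 23142496; -19708704; -17082448; 21713792; 8316048; 2765680; -24585968; -4544032;
  32379808; 1972768; -22439728; -7105984; 13446064; 27677216; -14088976; -36179392; 20282688;
  17988432; 4468336; -23394688; -22170992; 45834816; 8232352; -25643600; -19453024; -973824;
  44378064; -11090656; -37618384; 10330912; 19747328; 18711440; -30730080; -36971120; 33890400;
  19270096; -8414768; -20673424; -12271712; 42633648; -2382720; -35257792; -4892896; 6586608;
  35697232; -10046896; -31430320; 17909392; 6413472; 6656736; -18177472; -20739104; 34731936;
  7250528; -4857200; -8559488; -11776960; 24977632; -7267600; -13453584; 7473968; 2485760; 19067952;
  -8582672; -15581040; 9263792; -2792288; 4632992; -2156784; -5895616; 16428624; -3205664; -4711840;
  -1502352; -8311488; 11219616; -3263552; -1698768; 6605424; -4646544; 5058864; -6427360; -4707952;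
  5077104; -2618416; 4066192; -521504; -1694944; 3233312; -4240704; -1163888; 193072; -871664;
  3712448; -902352; -410224; 1138960; -2422352; 723568; -1312224; -118384; 2247424; -700384;
  1043392; -751712; -661760; 541904; -984576; 613648; 276416; 301760; 623200; -540832; -36448;
  -157072; -128128; 279680; -8944; 264736; 143008; -106560; -42352; -174624; -4800; 67920; 29328;
  105888; 8208; -4672; -43568; -70112; -9760; -1536; 24272; 15952; -2720; -9776; -24992; -23488;
  -12864; -944; 7904; 5072; 32; -3392; -5568; -5120; -3744; -800; 1360; 1216; -160; -1328; -1472;
  -976; -400; 176; 592; 720; 560; 288; 96; 16]); (ncons 102%N 0 [:: 8; 24; 24; 24; 80; 216; 288;
  136; 64; 368; 528; -128; -1520; -2032; -1296; -2104; -4216; -5888; -4280; -120; -120; -1392; -688;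
  -592; 6792; 6776; 4824; 13392; 11696; 32000; 17344; -22808; -14432; -6880; 43384; 55960; -31104;
  49928; 33248; -1608; 36760; -162048; 166672; 170920; 46952; 145616; -345536; 10928; 68296;
  -372352; 204984; -308656; 121040; 613296; -1194464; 60504; -713448; -171760; 1336304; -1729128;
  887672; 111112; -876632; 1023376; -3255944; 452392; 1906056; -1837400; 2428272; -2819008; -209032;
  3290968; -5744576; 2523184; -950576; 274800; 7311928; -7641384; 2540400; 1468200; -4191336;
  7430160; -9085896; 4501408; 9418272; -8267896; 6391880; -8769408; 1410064; 12498168; -15865280;
  7927008; 2874440; -533736; 13026904; -24381320; 6479384; 11865048; -11059520; 11768672; -17975520;
  11683000; 19572104; -29323160; 5516632; -7285152; 8190040; 20306344; -37650592; 13125176;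
  11643432; -7090104; 7419144; -38712736; 18637544; 26237976; -24097400; 5822136; -18546272;
  17198112; 22566216; -46127944; 8415120; 6642408; 10132808; 17319872; -46474864; 16558424;
  19423184; -12942696; 6019216; -30867992; 25099112; 26533160; -27580904; 3209152; -10787000;
  16083816; 17433848; -34061624; 9355504; 11424368; 4391984; 9247744; -31452832; 11118168; 15591848;
  -9709480; 5580800; -16329440; 13796272; 13270200; -17913720; 1142912; -5757200; 7737640; 8731008;
  -15920280; 3640008; 2738856; 339592; 2296712; -13365032; 3583896; 5778176; -2715280; 1539856;
  -6797680; 3071448; 3807888; -5683904; 350056; -2059832; 2931864; 2930192; -4248960; 358264;
  -142528; 600528; 1105360; -2626136; 1203992; 1452464; 216368; 584848; -1653640; 823520; 844496;
  -46808; 373872; -322864; 751872; 445416; -370912; -157512; -109104; 297144; 296016; -189600;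
  41728; 32824; 73256; 20360; -169920; 42344; 86968; 93032; 17464; -71104; -19496; 1848; -15584;
  -25600; -29008; 7104; 14744; -12056; -20696; -17264; 3936; 11224; 5664; 4648; 5248; 6408; 2816;
  -2384; -2968; -1296; -56; -968; -2680; -2784; -1944; -1216; -952; -648; 24; 576; 688; 536; 392;
  328; 248; 136; 48; 8]); (ncons 112%N 0 [:: -16; -32; 0; 32; -16; -112; -64; 240; 304; -64; -64;
  336; 784; 144; -880; 272; 1024; 480; 848; 512; 1968; -1328; -7904; -2624; -4784; -3056; 896;
  -5936; 4720; -8752; -15632; 20480; -3200; 13232; 30448; -1184; 63344; -59712; -38832; 79264;
  -44320; 35344; -97776; -84976; 189376; -178192; -62304; 87120; -119248; 410848; -227344; -167120;
  440592; -255520; 565232; -43872; -636400; 794912; -421664; 177824; 211664; -1424416; 1794688;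
  127360; -999136; 525120; -1913776; 2513456; 858256; -3142496; 2189248; -674736; 1363856; 492176;
  -6896128; 4105488; 1401584; -1805616; 1528128; -7664960; 6154336; 2333168; -9027568; 2777584;
  -3559296; 7712704; 4171120; -15173600; 5722096; 2110112; -119136; 2176384; -16606352; 13532480;
  10798608; -12777104; 1302624; -12480032; 15144272; 10717408; -24579968; 10451504; 3640512;
  10535904; 2829776; -31919104; 17022512; 14172912; -4541040; 941712; -19280720; 23415968; 14325712;
  -28646112; 452624; -2992544; 21188096; 12046176; -35630928; 12502032; 8882800; 1748992; -1047872;
  -32480256; 24144704; 17295696; -12231872; -3147152; -19452720; 19579440; 8479168; -25385376;
  3432976; 1178704; 14793920; 3902624; -28626256; 6036032; 5723792; 966400; 2264304; -17767872;
  14143088; 8431520; -9637344; -1802224; -11890032; 11522560; 7407776; -9325968; 3895632; -2197968;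
  5912096; 1532656; -11410208; 4340288; 2565312; 3820560; 2734688; -6670000; 3740032; 818208;
  -1851504; 912032; -2822944; 4450448; 2488704; -1843776; 514304; -2307936; 1083824; 886368;
  -1568672; 1715040; 6576; 671136; 207152; -2117504; 377504; -533968; 235712; 587056; -628144;
  581312; -540720; -362624; -227648; -484624; 299440; 54544; 143584; 98464; -216032; -86096;
  -122416; -50688; 132528; 40112; 128672; 48800; -26544; -21344; -88048; 10624; 34576; 55600; 44144;
  1232; 2112; -10080; -10256; -2736; 9152; 22944; 19616; 4512; -5104; -8864; -4656; -2000; -464;
  1520; 1792; 832; -1776; -3088; -2384; -752; 368; 544; 256; -64; -400; -672; -736; -560; -288; -96;
  -16]); (ncons 103%N 0 [:: 8; 40; 96; 160; 224; 336; 552; 768; 800; 600; 240; -120; -744; -1856;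
  -2904; -3592; -3144; -2040; -1896; -2688; -5096; -7048; -4448; -1600; 5008; 11648; 12904; 15288;
  -968; -14720; -11736; -5136; 28776; 38896; 16136; 23008; -41584; -32616; -6760; -32144; 118992;
  65032; 90008; 88456; -169392; -23984; -36584; -53704; 353008; -145648; 138240; 102600; -634800;
  341136; -776728; 183032; 593472; -592680; 1005640; -902912; -384192; 688040; -1339544; 1107264;
  206240; -795048; 2656272; -2606936; 205576; 216536; -3035264; 4487488; -3222344; 834600; 2123864;
  -4487312; 3889640; -4114200; -1485360; 5279512; -3956064; 4248024; -255232; -5740600; 7977480;
  -7212368; 600328; 5175408; -8698064; 14408400; -8431328; -3023936; 8442432; -13557320; 14430872;
  -7437992; -2496840; 15659104; -11795480; 6828576; -3237584; -9038000; 18288136; -10682168;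
  -1101616; 12923560; -14949752; 18682312; -15463184; -9997136; 24888616; -20597800; 17690888;
  -9838352; -8626552; 29121616; -28270248; 4924368; 648096; -7525624; 26874504; -25177880; -3895592;
  18023080; -16304192; 13251544; -18530632; -7483360; 36190832; -24425128; 5524728; -5819784;
  -8963840; 34648400; -32477240; 420992; 12661080; -7097344; 23364808; -28906552; -4089736;
  25414664; -13782120; 9622384; -14168008; -1455808; 31465504; -20676048; -840704; 312656; -2085360;
  24667768; -21742648; -3045768; 13410984; -4676280; 11628352; -17434008; -3261584; 18616512;
  -7922920; 2338632; -6815184; -2082792; 17109976; -11777856; -2547152; 899088; -1391120; 11309760;
  -11313664; -2583712; 4666432; -1581720; 3478912; -7518256; -1881544; 6378424; -1996424; -494784;
  -2713560; -1216256; 5504488; -3020192; -1501584; 284280; -346568; 3699968; -2798640; -1025776;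
  1212304; -85744; 1657984; -1814008; -118776; 1421512; 282304; 351088; -674744; 85616; 1147112;
  145992; -73416; 87096; 125264; 810008; -190408; -106520; 78824; 123808; 356936; -179328; -43320;
  38128; 82784; 27008; -117456; -78344; 48144; 15864; -31160; -79416; -65560; 4208; -40600; -45472;
  -56992; -26912; -7488; -25784; -32232; -28352; -12216; -4456; -8440; -10000; -4832; -560; 184;
  -3328; -3072; 96; 2304; 2120; 904; 1184; 2104; 2336; 1888; 1592; 1688; 1704; 1352; 904; 600; 432;
  288; 144; 48; 8]); (ncons 113%N 0 [:: -16; -64; -128; -192; -256; -368; -544; -576; -336; 160;
  960; 1808; 2992; 4128; 4320; 3888; 1584; -1808; -3856; -5264; -2128; 736; -2256; -3984; -16368;
  -24144; -22768; -19472; 15216; 33408; 32032; 35472; -22384; -30592; -28880; -42048; 91856; 54480;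
  70816; 54640; -155040; -39440; -146432; -84640; 249888; -4912; 239568; 75280; -373456; 230800;
  -552688; 199904; 414672; -215904; 911792; -680384; 116736; -93712; -738064; 530304; -95504;
  343936; 516992; -324800; -686336; 460112; -1507792; 1192496; 150320; -937120; 2576816; -2600656;
  2013104; -1127408; -1879632; 3058608; -2063248; 2322928; -1190848; -1198048; 1631648; -483664;
  -1662080; 178432; 30880; 371392; 2943136; -7096480; 4187872; -271376; -812912; 3726160; -9806000;
  8201104; -874304; -2963888; 1125264; -5658528; 8309040; 342864; -7285344; -291392; 2557664;
  1502016; 2337680; -10114592; 5654368; 10400576; -9249232; 2610096; -10909536; 10759968; 9953824;
  -15764752; 6978784; -2058768; 9994816; 497568; -19377776; 8792016; 9297008; 2495120; -1917248;
  -11913888; 10979248; 10857264; -15600400; -2537984; -1580912; 13924416; 9404448; -22688976;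
  2998000; 4199776; 3636128; -682352; -20050000; 13108304; 11846016; -4990400; -5298720; -14032400;
  11537504; 7227856; -13438864; -9744; -439472; 10661312; 1912656; -18461408; 1866864; 3335008;
  4766336; 501136; -10572608; 7724224; 5336896; -4115168; -3147152; -6396000; 7397248; 6287504;
  -5634256; 1477744; -1753600; 3653264; 1483120; -7747776; 3568368; 1502048; 3258128; 1439888;
  -4945648; 2947568; 18432; -419392; 277488; -1565328; 3221600; 1118464; -1274992; -197632;
  -1148960; 608832; 616912; -1225424; 1250864; 168112; 127600; 157200; -1579648; 654688; -258832;
  31216; 444576; -488704; 548144; -426560; -430800; -57424; -345264; 282960; -85024; -64768; 102640;
  -190848; -56240; -182192; -85040; 113088; 8032; 36272; -12816; -36848; 15072; -67008; -13744;
  22448; 43056; 56032; -688; 6064; 4320; 8912; 11632; 8896; 21312; 22928; 13136; 2288; -3136; 928;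
  4560; 4464; 4496; 4368; 4144; 1936; -256; -496; 464; 1136; 880; 256; -160; -464; -688; -736; -560;
  -288; -96; -16])].
Definition elimV_odd : seq zpoly :=
  [:: (ncons 74%N 0 [:: 8; 48; 128; 200; 224; 320; 688; 1152; 1120; 552; 408; 1208; 1408; -672;
  -2984; -1920; 1368; 1064; -4872; -9736; -8328; -6304; -7840; -9800; -3504; 10016; 12880; -968;
  -24488; -33392; 2056; 43824; 41360; 2992; -33976; 10936; 11720; -77560; -82088; 26856; 209256;
  153616; -166664; -169728; 7728; 150968; 186752; -214336; 158736; 341888; 54400; -70464; -833632;
  51752; 845008; 141416; 89712; -936016; -58360; 1706376; -1336584; -137464; -284312; 1078288;
  3695120; -3846512; -193320; 626536; 1065320; 3539328; -5749232; 975104; 4611424; -1621360;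
  1089848; -7163352; 665424; 10388280; -7315576; 1067536; -5047680; 924152; 13133256; -16755864;
  601176; 3033088; 2704040; 11806032; -23223816; 152392; 15655040; -5911136; 3365160; -18932176;
  6590640; 29449544; -27104192; -4753592; -3353896; 9181416; 28978896; -46133616; 6591976; 22195168;
  -2686504; 7856248; -47685176; 25555624; 38838488; -27289104; -5646024; -15235104; 28658912;
  28921216; -61694352; 4819872; 30141024; 10815856; 10844664; -70430632; 33152464; 44344104;
  -33313208; -3132168; -34976984; 57410600; 31183912; -72591656; 1697096; 9838856; 35779456;
  2806328; -75064448; 36357072; 42000408; -17577288; -18127520; -50776672; 58188024; 37748168;
  -59915288; -1517112; -5511368; 47195072; 1984944; -76735032; 26075552; 29979616; 12745576;
  -16203240; -53104128; 44631784; 29245648; -34035768; -10714104; -13122896; 48773504; 12188392;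
  -52645600; 6989440; 10297304; 24140664; -7183832; -38976592; 26044616; 20134280; -5264384;
  -13786088; -19636000; 27139704; 14472824; -20219392; -3314584; -1189944; 18334512; 1839928;
  -23957072; 5285104; 7105384; 8592832; -4217000; -15687016; 8546704; 5907992; -1884176; -6007984;
  -5321848; 8375800; 4156792; -6445424; -3357080; -309848; 4808928; 1234968; -5801576; 667352;
  1678016; 2270768; -1085136; -3579992; 1502640; 1660280; 707880; -1151928; -1182376; 1243352;
  990752; -470448; -687456; -88880; 1013864; 473560; -570904; -273920; 131952; 508880; 19808;
  -330104; -32168; 176056; 144808; -137968; -197568; 5520; 103376; 18280; -94240; -91160; 10712;
  33392; -17160; -50192; -24240; 19088; 11816; -19640; -25920; -3440; 12272; 3128; -10176; -7824;
  1872; 4344; -416; -2552; 624; 3288; 2424; 576; 488; 1480; 1760; 1168; 608; 472; 480; 368; 184; 56;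
  8]); (ncons 84%N 0 [:: -16; -80; -176; -224; -208; -288; -592; -736; -160; 864; 1520; 1696; 2640;
  4736; 5376; 3136; 16; -1568; -224; 1296; 3824; 6992; 128; -14016; -29120; -37360; -26432; -12944;
  15120; 43808; 10144; -34112; -82400; -77168; 12864; 35472; 126624; 169984; 16640; -48096; -223792;
  -135776; 138656; -21520; 349280; 263168; -75760; -46128; -840448; 15360; 469264; -102720; 938688;
  -235520; 197392; 494448; -2099216; 869872; -262176; 500592; 2727440; -2794256; 1557936; -1327968;
  -1519632; 2996176; -4320400; 2733872; 2047232; -919152; 2539184; -6557152; -41136; 6110160;
  -3421728; 1502928; -1727120; 178464; 11525840; -13302000; -3295216; 5682048; -731824; 14382256;
  -19704224; 587792; 16776160; -8487904; 3492464; -19460256; 9396672; 26111840; -18143024; -8677744;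
  -455840; 10399328; 17936288; -32827440; -11202048; 34309472; -1387152; 605296; -34390368; 2171824;
  53589392; -32991920; -15327280; -7723280; 22317216; 40780272; -61057856; -13575216; 34589584;
  15914880; -265648; -58598992; 9953696; 66444832; -21018784; -32717536; -18220176; 30662080;
  57316736; -66719472; -29888976; 39141632; 28216336; 18084528; -79616944; 1816944; 70753040;
  -10082448; -23216944; -44033376; 37608480; 67270096; -53289152; -34678288; 7810208; 36873456;
  30463024; -69250240; -7394608; 50304240; 9805376; -9371760; -55550336; 15912128; 54232352;
  -21502704; -19194800; -14011312; 24355408; 31724208; -45005440; -14920928; 16518944; 16199376;
  13420992; -38456880; 1109504; 24401440; -5495008; -3748032; -22032608; 13720896; 22691040;
  -13525648; -6437024; -6360640; 9093184; 8764832; -15067760; -687472; 7869216; 4294768; 1506592;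
  -12273472; 631216; 7497136; -2049936; 999792; -3867104; 4048336; 4467136; -5481712; -804752;
  -1282256; 2987232; 2297024; -2918736; 972848; 382800; 260256; -749264; -2126864; 1137520; 1152672;
  78320; -323760; -770176; 379872; -82272; -726864; -36224; 244944; 571664; -50864; -486224;
  -108048; -29744; 26304; -101776; -5312; 215856; 104240; -86608; -160368; -54800; 75664; 55280;
  11840; 28048; 46336; 21424; -37360; -38976; 10448; 40624; 28592; 3424; -1280; 3984; 80; -6000;
  -2160; 7712; 10880; 4864; -1200; -2192; -608; 112; 16; 352; 784; 480; -320; -816; -720; -368;
  -112; -16]); (ncons 88%N 0 [:: -8; -48; -120; -160; -136; -184; -456; -680; -280; 576; 880; 488;
  960; 3232; 4728; 2520; -984; -952; 2928; 5336; 3192; 1840; 2744; 544; -7776; -21024; -24376;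
  -8808; 12920; 23184; -5832; -46008; -42656; -23112; -12872; -30064; -14768; 88760; 83272; -56840;
  -163664; -142080; 100632; 140360; -4304; 44024; 48232; 154296; -46448; -402736; 35848; 349648;
  542544; 364640; -569584; 61568; 220576; -71800; 80352; -757056; 1024016; 1251232; -816616;
  -664376; -1387496; 976720; 1973232; -2123824; 919096; 600840; 1205976; 1453904; -6005536; 2421208;
  2293504; 1222040; 1569128; -6537936; 4861312; 1815200; -4529768; -1395496; -2853248; 8061608;
  4402256; -11016384; -676408; 2466352; 2211488; 2141352; -16699288; 11653656; 11596152; -8522248;
  -2545360; -18467336; 21214224; 7444144; -21752040; 4536008; -123616; 22090744; -9191128;
  -33920664; 16179040; 17642208; 2968744; -13491504; -21321520; 34630368; 14189568; -36515712;
  -5845016; 1140024; 42542872; -934848; -51885968; 22479272; 14971832; 14549464; -24701976;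
  -38598696; 53912208; 19776128; -20255680; -24221720; -11799496; 51959616; -1797704; -46358128;
  6464864; 18986928; 31462952; -23002752; -49947504; 32641928; 20860016; -1135072; -23110976;
  -21916136; 47505216; 6018608; -30476944; -12928920; 996944; 37582560; -7331048; -33200464;
  10123760; 10707152; 12968640; -18312488; -23845600; 24306432; 10411512; -2154600; -13364688;
  -8108112; 21896568; 521216; -11948808; -3785848; 4108432; 14948168; -3599184; -12284856; 3081656;
  4628480; 4586648; -4652296; -6778592; 8282232; 3065320; -659784; -4171528; -2966512; 6623816;
  104400; -1648848; -1454088; 598872; 3458080; -1674392; -2332256; -471128; 1061200; 1139208;
  -1130776; -1292392; 435312; 297008; -302984; -1024768; -585592; 668080; 159696; -223680; -519664;
  -155408; 225760; -110424; -219640; -110560; 154840; 174440; -42888; -144488; -21320; 74160; 83864;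
  21632; 18696; 78440; 72536; 39640; 64; 13240; 47032; 52800; 34280; 13576; 10520; 15672; 11400;
  2104; 80; 5584; 9256; 3928; -2840; -4296; -1896; -816; -2248; -3216; -2616; -1960; -2256; -2744;
  -2504; -1736; -1128; -848; -664; -424; -192; -56; -8]); (ncons 98%N 0 [:: 16; 80; 160; 160; 112;
  208; 464; 384; -448; -1344; -1568; -1808; -3088; -4608; -3440; 464; 3184; 4560; 5568; 5616; 3616;
  -832; 3744; 16800; 23920; 27712; 16096; -10032; -36160; -60544; -27648; 14512; 16880; 36992; 2640;
  -41392; -100592; -173920; 15552; 146096; 121024; 136240; -69392; 15728; -111616; -378384; 90016;
  160848; 376928; 279232; -521232; -30768; -319600; -332320; 420160; -449696; 853344; 465168;
  -376352; 74320; -1603584; 630000; 1066752; -11952; 211472; -390256; 953376; 792544; -2362416;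
  -1507744; 2257904; 1236160; 1204832; -3703728; -941408; 4741936; -1896016; -1091728; -3124112;
  3509472; 6791072; -5101792; -3931824; 663008; 6365808; 2557008; -7637344; -3557440; 9794976;
  4156400; -7354336; -6902192; 1312720; 17380160; -5421136; -14207408; 2143376; 8031632; 11420112;
  -18031248; -9984816; 17833264; 9667216; -7306480; -21150624; 1340320; 24724224; -1795856;
  -22310384; -2670192; 15050608; 16044928; -21542400; -25379552; 20592224; 17033824; -132112;
  -24854128; -7519536; 32743696; -1008272; -21425040; -13639440; 14949744; 31256192; -15278384;
  -24327136; 6595664; 17351392; 8219408; -23891408; -10011392; 28168512; 11515456; -9352512;
  -20321504; 620560; 25187920; -4151568; -13487216; -950032; 11815184; 15116880; -15902880;
  -14186000; 8059088; 8550720; 5767904; -11766880; -3050576; 12878496; -1266128; -5338784; -9542624;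
  1938176; 11957376; -3441376; -3744048; -2501552; 1617680; 3226432; -7109840; -2334480; 3448848;
  2969680; 1568304; -4408512; -1718592; 2233792; -1294032; -179712; -868272; 1163712; 2941424;
  -2063232; -889856; -1105120; -48064; 1297312; -1027568; 899136; 575248; 38672; -38400; -1222384;
  296864; 443136; 273232; 476880; 352; 350096; -60592; -373504; -9312; 120160; 369264; 204192;
  -11472; 75200; -48384; -73296; -82528; -8496; 154896; 89120; 6016; -66288; -69920; -30976; -41488;
  -22640; 6992; 22848; 4416; -34912; -43776; -24928; -6064; 256; -1632; -544; -1088; -6960; -11632;
  -9824; -3200; 1328; 1440; -32; -768; -720; -576; -272; 416; 1056; 1184; 832; 384; 112; 16])].
Definition S_odd : zpoly :=
  [:: 16; 96; 336; 896; 2016; 4192; 8160; 14944; 25712; 41792; 64960; 96832; 138576; 190432; 252192;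
  323136; 403280; 488192; 577776; 663008; 742880; 807264; 845408; 852992; 813008; 735680; 603888;
  426304; 154992; -164832; -662560; -1167232; -1961744; -2745440; -3831568; -4976480; -6323488;
  -7963776; -9737088; -11922624; -14049056; -16730880; -18712768; -22106944; -23185024; -27202464;
  -27329376; -30986784; -31160528; -32118304; -32655104; -29536256; -29824624; -23186848; -21963424;
  -11097152; -9546512; 8470560; 9464416; 36101056; 41186096; 67850304; 87080288; 103928672;
  143999264; 152810240; 204500048; 219034752; 270198800; 296573504; 345519888; 371590624; 427301264;
  450557760; 505322400; 540971296; 570785152; 632556448; 639297056; 698885664; 715490880; 738643872;
  786484672; 788103072; 820108320; 851222336; 824128704; 896798464; 836041472; 887143392; 858994304;
  859426656; 856346784; 847120512; 798507760; 827480288; 747509392; 748039712; 734974128; 623461088;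
  724032816; 545867456; 636216128; 524144544; 513985280; 500209120; 452575680; 410073568; 442900496;
  339497216; 392040016; 342601184; 267230336; 375698048; 205213216; 327235168; 241181120; 226525440;
  292818384; 209119392; 232414832; 283430656; 159412304; 340455136; 184868640; 281366784; 282270352;
  240338208; 309322032; 280069856; 252428800; 345179872; 267309232; 283665120; 369091712; 176467040;
  448645152; 176467040; 369091712; 283665120; 267309232; 345179872; 252428800; 280069856; 309322032;
  240338208; 282270352; 281366784; 184868640; 340455136; 159412304; 283430656; 232414832; 209119392;
  292818384; 226525440; 241181120; 327235168; 205213216; 375698048; 267230336; 342601184; 392040016;
  339497216; 442900496; 410073568; 452575680; 500209120; 513985280; 524144544; 636216128; 545867456;
  724032816; 623461088; 734974128; 748039712; 747509392; 827480288; 798507760; 847120512; 856346784;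
  859426656; 858994304; 887143392; 836041472; 896798464; 824128704; 851222336; 820108320; 788103072;
  786484672; 738643872; 715490880; 698885664; 639297056; 632556448; 570785152; 540971296; 505322400;
  450557760; 427301264; 371590624; 345519888; 296573504; 270198800; 219034752; 204500048; 152810240;
  143999264; 103928672; 87080288; 67850304; 41186096; 36101056; 9464416; 8470560; -9546512;
  -11097152; -21963424; -23186848; -29824624; -29536256; -32655104; -32118304; -31160528; -30986784;
  -27329376; -27202464; -23185024; -22106944; -18712768; -16730880; -14049056; -11922624; -9737088;
  -7963776; -6323488; -4976480; -3831568; -2745440; -1961744; -1167232; -662560; -164832; 154992;
  426304; 603888; 735680; 813008; 852992; 845408; 807264; 742880; 663008; 577776; 488192; 403280;
  323136; 252192; 190432; 138576; 96832; 64960; 41792; 25712; 14944; 8160; 4192; 2016; 896; 336; 96;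
  16].
Definition elimU_2mod4 : seq zpoly :=
  [:: (ncons 72%N 0 [:: -8; -40; -48; 88; 240; -56; -656; -328; 1104; 1032; -1720; -2200; 3088;
  5288; -4760; -13000; 2472; 24184; 8000; -32864; -24880; 35520; 41032; -43144; -67984; 54496;
  126136; -37248; -205904; -41096; 252344; 146592; -250064; -228168; 267120; 342232; -319120;
  -608504; 226496; 935304; 125488; -1091232; -576752; 1027496; 877744; -1055552; -1280192; 1166760;
  2167696; -789672; -3228408; -386216; 3658248; 1750336; -3465416; -2798432; 3414096; 4029264;
  -3634936; -6440968; 2477504; 8990320; 513032; -10260512; -4171232; 10089096; 7055936; -9788568;
  -10207344; 9422728; 15634320; -6825704; -21768736; 719168; 25151424; 7503432; -25249136;
  -16077728; 24094464; 23844616; -23865864; -33531520; 19296968; 46745376; -6375512; -58538496;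
  -10271712; 62485688; 27814984; -58149152; -43078264; 57725568; 65110232; -58304656; -94067472;
  41988720; 116266536; -5764896; -131093832; -28989880; 133705848; 44412536; -141137424; -78404456;
  148587008; 139265744; -130455304; -194864976; 87796944; 212605896; -43877680; -218382216;
  15292896; 261716832; 24210736; -300520760; -116349648; 281781712; 196386320; -225742928;
  -228287104; 189566896; 265409656; -193932424; -323851888; 142836432; 404397264; -3985968;
  -397943128; -73080504; 358063816; 109274824; -348947824; -140440848; 364156824; 266531488;
  -324495344; -377718952; 197106736; 351260024; -117444184; -343897288; 91973920; 366783224;
  -48236632; -439627096; -86950744; 384804648; 186073112; -262749264; -200416152; 234096736;
  189723712; -234684152; -251190672; 184500104; 325024824; -48783496; -287080744; -34067520;
  218312936; 18567384; -196946912; -32413352; 220204080; 118352008; -178925520; -172819008;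
  81442904; 145119768; -27681560; -94873504; 38411648; 115378656; -24285088; -138951928; -37694136;
  98599344; 79128176; -36574864; -59601856; 16014200; 32417440; -30831584; -50653664; 12030640;
  66422824; 30075168; -42995912; -46153432; 5762496; 29287392; 1969192; -19902760; 7030888;
  32478192; 3973544; -37039632; -27262768; 19485968; 33195272; -2069960; -22902032; 4368; 18156224;
  -1865984; -23844008; -6234816; 23833192; 16670056; -13533408; -17839128; 4947712; 13602592;
  -3469232; -12521024; 2718728; 14161264; 1957400; -12726672; -6566624; 7987304; 7026680; -4622720;
  -5835232; 3496776; 5791288; -2334280; -6229608; 169208; 5353696; 1471008; -3643944; -1788192;
  2477800; 1664824; -1923880; -1798104; 1286224; 1862256; -519704; -1555184; 6640; 1090528; 151184;
  -780760; -209792; 588192; 285368; -385592; -306368; 192728; 246384; -75520; -167048; 28184;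
  115600; -2920; -81480; -16664; 48496; 22480; -22280; -16984; 8504; 9984; -3312; -6000; 848; 3632;
  632; -1584; -848; 320; 416; 56; -88; -48; -8]); (ncons 86%N 0 [:: 32; 128; 16; -560; -464; 1360;
  1872; -2032; -4448; 2320; 8672; -2832; -17200; 1904; 33984; 10096; -55616; -43440; 68384; 91600;
  -61888; -134112; 50640; 187376; -43216; -302048; -8832; 460368; 185632; -533104; -465920; 467744;
  701040; -415152; -860608; 441840; 1216608; -236800; -1887968; -441216; 2369792; 1318016; -2097104;
  -2003008; 1636176; 2735152; -1900384; -3974480; 2010656; 5564432; -113280; -6831568; -2993296;
  7249488; 4563792; -6771312; -5034192; 6416496; 8296256; -6507712; -13873856; 5094528; 16665776;
  108864; -15705664; -6318592; 15965136; 8710960; -18939584; -10227808; 19237776; 18034368;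
  -13849072; -29375120; 6567392; 32678560; -691440; -26769776; -4350256; 26040832; 11226560;
  -35330016; -22391424; 37380928; 34411888; -19803856; -41832640; -2176096; 41012256; 1999632;
  -38789728; 5245808; 45026112; 15602832; -51073632; -52718640; 37197680; 65254528; -6946800;
  -40378464; -3108976; 36150656; -4475504; -72462416; -6792112; 92147728; 58838416; -53227728;
  -87763600; 2299056; 62569488; -12998704; -53621920; 52875376; 88545072; -17839696; -137223600;
  -74655344; 105576256; 82455344; -40045056; -35434048; 52691360; 25190864; -112374880; -111123616;
  90868768; 167802112; -234608; -92460528; -28061664; 42256272; -37707328; -90973200; 67909472;
  172016224; 29556464; -129794192; -83121568; 31200928; 27382432; -48360576; 42241968; 138302752;
  10369232; -142957168; -105696896; 52045856; 69251488; -20164288; 10548336; 102362464; 4656192;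
  -150739408; -100138528; 80415024; 120294464; -21077696; -45802864; 59789568; 28941504; -120755680;
  -108884480; 82766912; 153939648; -5142240; -108309200; 479440; 63483440; -44732976; -102065040;
  35928336; 149086576; 31276320; -119739248; -62053008; 66423120; 36128096; -62693152; -22822560;
  90492208; 58316512; -77456960; -87607008; 30221056; 72026192; -8164000; -46441344; 19187552;
  50572416; -19024432; -64991840; -6582064; 55624464; 25988176; -31010160; -20799280; 20608976;
  12249040; -24258288; -17996096; 20825696; 26193328; -6996944; -22586512; -2525584; 12841200;
  1612416; -9486240; -67296; 10968720; 3732816; -9111328; -7431472; 3628016; 6404144; -214400;
  -3501488; 307488; 2737712; -463184; -3266432; -921760; 2590512; 2048448; -961296; -1730704; 47232;
  969920; -54176; -771808; 54256; 852880; 287776; -629024; -507456; 237936; 406592; -31616; -228720;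
  22272; 171984; -11904; -163488; -46448; 110448; 77824; -39280; -56416; 5472; 27488; -2336; -16464;
  1968; 14160; 3552; -8368; -6096; 1792; 3904; 1040; -1056; -832; -48; 192; 96; 16]); (ncons 73%N 0
  [:: -8; -40; -40; 128; 280; -176; -912; -168; 1896; 1160; -3312; -3080; 5880; 7528; -9960; -18760;
  11520; 39432; -2608; -65264; -21160; 88584; 54784; -115584; -104744; 155360; 201248; -183576;
  -365616; 139472; 559248; -3664; -729136; -175920; 906248; 407936; -1158848; -849408; 1376072;
  1583392; -1312472; -2434408; 905656; 3186320; -383568; -4013752; -301616; 5170912; 1688512;
  -6302920; -4035352; 6618448; 6730784; -6024360; -9302224; 5173720; 12291792; -4072392; -16380632;
  1139856; 20498104; 4380512; -23120088; -11085536; 24156528; 17449232; -24647024; -24945360;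
  24320656; 35889240; -21032344; -48121936; 13093480; 57291728; -1405440; -63751792; -11502224;
  70805304; 25381392; -78183904; -44200400; 79845312; 69752864; -72141856; -95197984; 60283560;
  113781352; -45878520; -129634304; 28450464; 153448912; -1675928; -176237640; -38302896; 182120496;
  78490768; -171468856; -112735472; 161175696; 145610392; -162868664; -190612536; 141073864;
  244415264; -88232696; -273158240; 30631080; 274278456; 9282216; -291847392; -36374624; 316615000;
  114470528; -317860368; -217716008; 270463816; 263337168; -205503472; -282506808; 194502352;
  320137584; -156983720; -412490184; 62365432; 471014776; 55409296; -392921824; -139607160;
  380854784; 156696544; -400345280; -239250136; 402438224; 407476560; -323185688; -464492960;
  140272192; 461367240; -119708688; -475820272; 97804024; 547669848; 30568640; -637413376;
  -214095096; 512602512; 343497344; -431149064; -326669120; 424094704; 383436296; -410237720;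
  -569009600; 312864176; 654769248; -84152712; -614712816; 15258088; 556014824; 8649944; -603367048;
  -125442696; 679163256; 306679696; -554543272; -434698352; 403580096; 423291752; -344521592;
  -440495288; 337351752; 559773072; -240224712; -622382672; 36805584; 570401680; 71797312;
  -490932296; -86821712; 484517376; 141216488; -496366904; -274968696; 404865936; 369690528;
  -277594480; -356481216; 203852992; 329285336; -176394728; -370662472; 109263472; 403409680;
  1246064; -359384272; -75253224; 283775672; 92541664; -250849912; -111201952; 242624192; 160201800;
  -193962816; -195082192; 118912416; 186719368; -69443384; -163158136; 52167232; 159590768;
  -27033144; -159491752; -15071632; 137404856; 45000944; -102467176; -49683224; 79351464; 49520112;
  -67653280; -58102464; 50919272; 64774400; -27494392; -58649704; 10418696; 47093968; -3541232;
  -40442080; -1578776; 36602136; 9164304; -29421776; -14757368; 19802032; 14968624; -12909528;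
  -13073016; 9294832; 12347232; -6006880; -11876896; 2188280; 9922064; 507112; -7198088; -1427176;
  5213424; 1670016; -4021640; -2059312; 2835232; 2257984; -1603864; -1969616; 742024; 1467152;
  -339528; -1106680; 106376; 861608; 97344; -604640; -212208; 350512; 204736; -184400; -154784;
  98984; 116400; -48648; -89936; 9488; 58256; 9488; -30160; -11928; 13056; 8152; -5728; -5520; 1912;
  3464; 64; -1672; -680; 368; 360; 16; -96; -48; -8]); (ncons 85%N 0 [:: 16; 64; 16; -256; -272;
  464; 896; -256; -1600; -464; 2128; 992; -3584; -2096; 7152; 8976; -7792; -23680; -4768; 32640;
  30208; -17600; -47040; -4256; 46224; -6656; -68448; 16704; 150144; 84704; -215472; -285552;
  126640; 383264; 78000; -325280; -138080; 425184; 38304; -808896; -292480; 979072; 1180720;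
  -560736; -1880992; 42320; 1561264; 57664; -1301520; -216320; 2695568; 1198400; -4217136; -2852752;
  2889216; 4521152; -116064; -5505024; 350512; 5657584; -2183584; -6604848; -782592; 9661168;
  7631040; -11498080; -10451600; 7785744; 8980288; -2733456; -11587920; 4414096; 19671568; -7776672;
  -24500464; -652096; 22871168; 16615776; -21267168; -21041824; 22125616; 13412160; -23490752;
  -18335664; 21375568; 42866336; -13187760; -58275568; 1444016; 43574720; 9025600; -28021056;
  -12290544; 49078864; 16274064; -76750096; -37668384; 58449616; 65304992; -11458544; -68415616;
  6677744; 54136528; -44807488; -62763536; 39616048; 107006848; 33462992; -115562176; -79074816;
  63965744; 45414368; -45439776; -11151600; 82234880; 72797888; -106073600; -177239040; 39205248;
  144646272; 42849200; -61059600; -26195536; 84302480; -28532592; -187984176; -28557152; 207425440;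
  163911824; -65820992; -178272272; 11621792; 95356544; -94434432; -95335136; 146153232; 237792688;
  -17188768; -294864496; -139041824; 183521280; 91623744; -102359920; -8077872; 190591648; 88080272;
  -285330720; -265104176; 168115216; 289803216; -15706336; -164774592; 27504592; 155895792;
  -127260336; -300633648; 63090992; 353209152; 121628624; -233385648; -168069472; 128825984;
  72609008; -196022320; -61679888; 265627168; 202141952; -168714400; -278275152; 33347536;
  191240048; -22675520; -113139648; 92858944; 176948448; -57254048; -245566384; -60107792;
  184765376; 100465552; -79537328; -41953968; 77784096; 18909568; -130002576; -80388496; 105508864;
  122067776; -20475776; -79679424; -9838688; 28887776; -27052400; -42191152; 35856304; 71465744;
  8106256; -53045568; -37450688; 7817616; 14159888; 1291008; 9983568; 18067200; 1666528; -19063120;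
  -20276288; -4166384; 10817184; 15601296; 9944384; -3814992; -11935584; -5960320; 1294560; -210752;
  -735920; 7257232; 10399600; -2215168; -13691840; -5994384; 7732736; 6488384; -3267104; -2584272;
  5141696; 2864224; -6654864; -6169984; 3958736; 6983696; -527392; -4735552; -52128; 3206512;
  -610336; -3483472; 59360; 3551760; 1192224; -2436400; -1561712; 1260704; 1103536; -869664;
  -815696; 792160; 903136; -473712; -893136; 67152; 617424; 95568; -350992; -72880; 241584; 61632;
  -195888; -100224; 116720; 108144; -37264; -71440; 2688; 34784; -416; -20608; -208; 15648; 5040;
  -8528; -6752; 1584; 4000; 1120; -1040; -832; -48; 192; 96; 16]); (ncons 100%N 0 [:: 8; 24; -32;
  -184; -72; 480; 424; -968; -1352; 1504; 2984; -2568; -6592; 3816; 14456; -2336; -27608; -6376;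
  43528; 24024; -59608; -50648; 78112; 93240; -101584; -172216; 105608; 285856; -62768; -414696;
  -32928; 544608; 165928; -696552; -375384; 869504; 758448; -952248; -1292912; 841168; 1850456;
  -564384; -2428120; 154848; 3122544; 500344; -3954656; -1774840; 4475424; 3523560; -4457152;
  -5348328; 4041720; 7271680; -3333760; -9712656; 1987704; 12680928; 863112; -15024328; -5101024;
  16096944; 9553104; -16831568; -14424584; 16924080; 20335440; -15670016; -28294688; 11451528;
  35631192; -4891296; -39976176; -2557136; 44448712; 11915696; -48936680; -22218272; 51664208;
  36687360; -48209528; -51814608; 41033024; 63796896; -34918296; -74489440; 24403480; 85030256;
  -8418880; -99666216; -9417248; 102846824; 28674544; -96678208; -50326000; 98299728; 67632216;
  -95270024; -86450880; 82323136; 106174672; -62905952; -124686976; 41182744; 129916064; -34910208;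
  -131314936; 3842936; 141481256; 18019088; -146110488; -32929944; 128783208; 63191384; -118921224;
  -61107440; 115719712; 87353032; -96553304; -97843352; 96095840; 100528448; -61290008; -106340960;
  55632264; 104205872; -53986568; -112684816; 32605128; 108002120; -31395848; -105283888; 4973304;
  102270680; -15681864; -107428248; 9754400; 101220360; 7292240; -102468568; -12804512; 101073712;
  20485536; -99770512; -19773192; 100878736; 36148592; -94385120; -50507512; 93180808; 55822504;
  -84560144; -61978560; 77541240; 73422496; -67552648; -83967752; 55271888; 89230704; -41351200;
  -88022848; 27891976; 90213880; -13818752; -90491448; -231608; 85321384; 13498360; -76512320;
  -24820984; 66679528; 32731680; -58523072; -40145648; 46960824; 44507040; -34439192; -46284568;
  22802744; 45072016; -13351136; -42543376; 4870528; 39109488; 3246928; -33848720; -9294632;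
  27636960; 12876648; -21640168; -14889824; 16179984; 15979952; -11056640; -16078880; 6207736;
  14753072; -2436400; -12746936; -198456; 10683584; 2051872; -8661664; -3378944; 6535440; 4047384;
  -4515168; -4072792; 2885504; 3716216; -1711672; -3279720; 784000; 2738696; -102904; -2130952;
  -317656; 1531224; 486088; -1057032; -528392; 697104; 510968; -413856; -443552; 203752; 339560;
  -76712; -237312; 12624; 158136; 17648; -100744; -31536; 56112; 30968; -25864; -22496; 9664; 13592;
  -2784; -7632; -8; 3952; 1048; -1528; -936; 272; 408; 56; -88; -48; -8]); (ncons 113%N 0 [:: 32;
  96; -64; -400; 80; 1040; 48; -1920; -384; 3392; 1376; -6480; -4480; 10432; 11568; -10016; -21616;
  3008; 30576; 2112; -35936; -1680; 43776; 21008; -57792; -73216; 58784; 107232; -11328; -90544;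
  -66368; 109232; 86640; -192752; -74720; 155456; 246032; 47040; -559248; -104528; 521632; 44816;
  -146160; -388848; 338176; 932016; -1001024; -867296; 512688; 775312; 972208; -1652560; -830336;
  2202560; -436928; -998640; -1051056; 473088; 4324096; -2139328; -3852688; 1731664; 1353024;
  2141376; -3865296; -3431904; 8167600; 1390704; -6254656; -3547696; 2053264; 10228272; -3186912;
  -12952560; 6535904; 10804352; -3056800; -12178608; -5920784; 19470848; 9215296; -24004944;
  -8310576; 19441584; 13301248; -13999664; -27263008; 17378384; 38770816; -20589808; -33550544;
  8572112; 40387488; 11577136; -57538560; -10337952; 61065008; 20334112; -55967536; -41393264;
  52780416; 58530512; -52420912; -84153744; 49171360; 85342272; -34949024; -103879872; 1232800;
  126344048; 8136864; -136557696; -29091824; 135400192; 61646480; -128769824; -96346672; 133259232;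
  131316912; -120851744; -142715264; 97294352; 175971296; -64384704; -200416304; 41037952;
  217996336; -8798976; -220791184; -31346672; 215509760; 73603792; -216764032; -108256496;
  202365824; 134858912; -177106064; -168617488; 144971696; 193112192; -114628272; -207343376;
  82038448; 211037040; -45038160; -212252096; 6166912; 207680576; 26600368; -192241152; -54551696;
  169080800; 76825840; -146328064; -96001744; 121971488; 108975856; -94480448; -114228192; 65005216;
  112800176; -39530432; -106722160; 19759024; 98979392; -1073536; -87550864; -14855856; 73197184;
  26383296; -57208720; -31380480; 43474416; 33576320; -31400816; -34476096; 19963472; 33153280;
  -9424784; -28725904; 1803648; 23022864; 2658192; -18097728; -5560160; 13847728; 7782336; -9338048;
  -8659584; 4975312; 7843296; -1898560; -6342896; 150320; 5061552; 1014080; -3960800; -1988560;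
  2613520; 2401248; -1280768; -2176304; 386832; 1706736; 51472; -1341168; -330960; 1032752; 558992;
  -660496; -628256; 305792; 527344; -89120; -380704; -2000; 277280; 53792; -197664; -91264; 115680;
  96272; -46240; -70144; 11136; 42176; -96; -25712; -4176; 16144; 7552; -7312; -7152; 960; 3856;
  1232; -960; -816; -48; 192; 96; 16]); (ncons 101%N 0 [:: 8; 40; 40; -128; -288; 136; 864; 256;
  -1664; -1248; 2656; 2944; -4520; -6888; 7168; 16848; -5720; -33432; -7360; 49408; 33504; -56216;
  -65320; 59464; 108192; -63080; -186456; 33112; 298888; 82144; -386768; -275384; 398424; 487816;
  -361688; -731560; 302992; 1114792; -74872; -1597712; -501288; 1936744; 1368320; -1963728;
  -2302784; 1792824; 3356944; -1474040; -4828032; 582896; 6538904; 1374352; -7767904; -4224872;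
  8206480; 7432424; -8025984; -10909016; 7191952; 15438536; -4732320; -20800728; -95080; 25302600;
  7218768; -27672784; -16144864; 28369656; 26273144; -28039912; -37716952; 24464864; 51280744;
  -14599432; -65622296; -291296; 76589200; 18841232; -81514312; -40642568; 84516088; 66862848;
  -85333800; -98665536; 75604464; 131829104; -50632784; -161674736; 16503944; 184356424; 16740304;
  -201722200; -60323144; 218428656; 122123152; -220553088; -189216000; 194453656; 251628448;
  -155633376; -299539888; 114285976; 352016136; -57788776; -411039200; -28752352; 439092936;
  140038712; -435349008; -231261048; 408206728; 315541968; -378962776; -422821200; 343073128;
  528265384; -230312024; -609527304; 101765448; 643583240; 9131928; -651908400; -129341360;
  682738656; 262535416; -661685984; -441102704; 569810176; 568993080; -462410888; -642621344;
  343044256; 722335400; -242451488; -801709648; 65871968; 844078512; 131188320; -805607608;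
  -275417016; 723585896; 407176872; -667155640; -526065568; 587482064; 670704824; -436101208;
  -756884952; 261669056; 770246584; -105343328; -771288352; -10513976; 767125656; 156780512;
  -733394200; -319779184; 637852320; 432800584; -514909120; -494062912; 412214216; 534751696;
  -310382784; -585116520; 183258408; 600789704; -49204176; -560729392; -58152976; 500368728;
  130372912; -448868880; -198425224; 392143520; 262825616; -309550472; -301074480; 216459864;
  305419776; -142336312; -294722912; 84720432; 284028728; -26379984; -263342352; -30064456;
  225658120; 69681080; -180730680; -88556688; 142655560; 99960832; -109579152; -108863336; 75217056;
  109662536; -41779312; -99630232; 16632024; 85190944; -482712; -72333928; -11734960; 59876432;
  21689280; -45633984; -27047936; 31568408; 27317664; -20638280; -25208496; 12831928; 22832064;
  -6442440; -19868264; 1179752; 15852696; 2122264; -11711048; -3557576; 8381208; 4041208; -5863824;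
  -4177264; 3732192; 3900752; -1989896; -3207976; 843728; 2413816; -219440; -1759872; -126080;
  1245584; 326192; -805336; -387968; 453712; 335672; -230440; -251088; 106344; 178072; -37024;
  -121240; -3584; 71936; 18720; -35608; -17704; 14824; 11696; -5552; -7144; 1240; 3832; 424; -1656;
  -776; 320; 352; 16; -96; -48; -8]); (ncons 113%N 0 [:: -16; -64; -16; 256; 288; -400; -864; 64;
  1360; 736; -1520; -1168; 2544; 2224; -5248; -9248; 3472; 22272; 12448; -24448; -37552; 400; 48288;
  25536; -40560; -18304; 55776; 28064; -110944; -149488; 114000; 313440; 41888; -321840; -274832;
  209168; 350208; -257456; -317552; 402112; 638752; -164880; -1368768; -489520; 1615088; 1066544;
  -884480; -1510304; 405328; 2156272; -1075008; -2978128; 900832; 3881408; 1851808; -4904240;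
  -4684240; 4960944; 4999648; -3001216; -5683248; 1218672; 9870336; -1473072; -13820000; -730448;
  13590176; 8947536; -12379872; -16646112; 12301952; 17638224; -10361600; -19311584; 5372512;
  29902944; 1747120; -40914272; -11827520; 39283552; 25216528; -29283680; -37021840; 26733488;
  46022896; -31666256; -60086928; 23079344; 77351520; 8591424; -87329984; -38224272; 85055232;
  43283488; -75879536; -53291024; 78393184; 96860176; -79053600; -139816752; 43650064; 149693808;
  1698080; -140197536; -24396016; 147852608; 39654320; -185815712; -85678944; 180163968; 155208400;
  -122644000; -195461552; 81812112; 194043728; -74617232; -208712432; 60173440; 264042064; 25595872;
  -285934640; -112883904; 247253648; 142284784; -197048288; -151172576; 199577936; 203388704;
  -197974272; -289731920; 124417040; 311777760; -31193232; -277613632; -14606240; 266588224;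
  18031520; -297956128; -74331104; 297945264; 166075888; -229514288; -209629104; 159322496;
  193838864; -143695808; -191261280; 132414384; 235750624; -72144864; -253872976; -4903696;
  211478816; 35954624; -162783888; -29736048; 157466832; 49850928; -158378192; -91942688; 117887072;
  108405616; -61406752; -84806448; 40113232; 65265232; -42900272; -72083664; 28242352; 74888352;
  4086432; -51439264; -17755360; 23080800; 6154064; -15719120; 1730928; 18593488; 5794992;
  -10286480; -10638624; -5613792; -314016; 9949792; 12618416; -3201696; -13972272; -1002032;
  10321296; -2018432; -12812224; 2721616; 18214480; 3041616; -18112400; -8684320; 13255216; 9414416;
  -9912208; -8301008; 9496416; 9399200; -8085216; -11143936; 4498096; 10680496; -1284704; -8508384;
  77136; 6916800; 435120; -6154400; -1412528; 5116176; 2386688; -3490224; -2515616; 2118336;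
  2099456; -1369760; -1762016; 892256; 1581760; -388928; -1301792; -22608; 892400; 182288; -555264;
  -186752; 360736; 176720; -235216; -177120; 120080; 147664; -35904; -94192; 320; 50336; 5472;
  -28736; -7104; 17008; 8944; -7424; -7792; 752; 3952; 1312; -944; -816; -48; 192; 96; 16])].
Definition elimV_2mod4 : seq zpoly :=
  [:: (ncons 72%N 0 [:: -8; -48; -88; 48; 360; 184; -896; -1200; 1216; 3120; -1240; -6680; 744;
  14184; 2816; -28904; -18232; 47472; 54904; -58120; -114704; 49080; 193224; -21104; -308152;
  -49880; 475240; 225984; -665400; -575344; 778960; 1082248; -750576; -1711032; 571072; 2521600;
  -134880; -3579568; -854352; 4679936; 2603304; -5437936; -5038616; 5591264; 7964624; -5173680;
  -11675600; 3693656; 16247176; -294616; -20997856; -5656928; 24669488; 13822016; -26822288;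
  -23812072; 27380056; 36134048; -24966648; -51438392; 17079528; 67929360; -3139224; -82667256;
  -16972976; 93398112; 42846200; -101696648; -75604688; 104926240; 114457600; -96258696; -158341688;
  72310808; 204013832; -35897432; -243764392; -10547512; 275292256; 74624344; -300678552;
  -158105184; 315275896; 249987600; -300283840; -347108296; 249669472; 446403896; -185805864;
  -539459184; 103745800; 620505632; 17688304; -685627296; -181918216; 720095168; 357506752;
  -707203600; -517255112; 647144048; 690063744; -572499720; -878791472; 446654608; 1042098376;
  -244341256; -1168318744; 11157768; 1204133664; 226798864; -1227652648; -471673464; 1236638744;
  739535384; -1130316040; -1042801080; 950181096; 1272122232; -687409392; -1414806728; 456323128;
  1556060360; -201554680; -1636659776; -185723896; 1685378832; 558812008; -1559489040; -866029680;
  1342507184; 1116544768; -1186684488; -1350712864; 931705784; 1620485216; -603158232; -1749922256;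
  184314360; 1719668160; 180158544; -1668897680; -431895184; 1586509472; 772333768; -1468194824;
  -1104800488; 1186779720; 1337884376; -822409608; -1449307088; 560104512; 1475807104; -295293000;
  -1538110464; -28776392; 1529118792; 381082728; -1367969952; -643322952; 1148023576; 782800936;
  -949976544; -921179480; 778628048; 1062681304; -533199608; -1124307424; 239729136; 1074856672;
  -16727712; -977165112; -133878584; 900121688; 275962224; -807592656; -432717264; 650265296;
  536256648; -468689888; -553788168; 321762248; 539610224; -210742728; -534612248; 94332760;
  511760408; 26343640; -443042504; -112837312; 352582488; 153180840; -280548904; -177046464;
  221910128; 199827576; -155850768; -208083776; 86161856; 190240304; -34506576; -160693984; 4347272;
  136224984; 18602896; -114313808; -39671560; 87327568; 51856080; -58539440; -51839008; 36711936;
  46555768; -22498560; -41855160; 10966376; 36688232; -649064; -28816152; -5748200; 20329464;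
  7905816; -13803008; -8057696; 9409144; 8035824; -5646224; -7378784; 2478912; 5853840; -480696;
  -4091816; -350544; 2801376; 702040; -1897728; -893456; 1147440; 899424; -531504; -689792; 185232;
  456624; -35200; -288952; -24416; 185400; 61144; -98416; -63224; 37984; 44184; -7896; -22928; -144;
  11672; 2520; -5368; -2648; 1968; 2104; 104; -688; -272; 128; 152; 56; 8]); (ncons 84%N 0 [:: 16;
  80; 80; -256; -592; 192; 1648; 736; -2864; -2768; 3984; 5552; -6752; -12192; 10944; 30400; -5936;
  -59760; -23216; 80272; 71744; -75856; -115472; 72624; 165696; -96272; -289968; 62496; 488224;
  150704; -616384; -479920; 551728; 709392; -430032; -897760; 446800; 1411664; -339680; -2186368;
  -459168; 2546032; 1843584; -2245664; -2847408; 1850016; 3211552; -1644032; -4441408; 862016;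
  7039600; 1144256; -8419680; -4274704; 6839088; 7746912; -5200384; -10058432; 5700304; 11505776;
  -4260368; -15300384; -2292256; 20698912; 9212800; -20759456; -13702896; 13307776; 19342912;
  -9416928; -26836048; 12233520; 31251536; -5289504; -35212432; -15454736; 40653616; 30127136;
  -34749792; -32015440; 19852512; 38019136; -14591568; -55803472; 12457088; 70476336; 9895392;
  -68780384; -48196192; 55239232; 65406624; -39327248; -62249216; 36362112; 81971968; -31256336;
  -110944880; -13253632; 130233888; 69708128; -113346256; -81906464; 64801504; 87191616; -75040208;
  -129172000; 86009744; 171427360; -32384272; -205473024; -56251904; 168128752; 94043136;
  -145062848; -76663168; 172684912; 110598432; -165243792; -206636016; 122043376; 263567840;
  -20313472; -213275712; 3414560; 186447456; -8471792; -227741360; -45497648; 281673424; 130688080;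
  -211961152; -191125232; 107710928; 153597312; -108186816; -141631376; 132357920; 200080144;
  -104052880; -236852240; -17391808; 190282560; 58222336; -124435616; -6016544; 120019152; -1503840;
  -158017088; -63711072; 125663472; 109988768; -50856768; -59764912; 25427952; 1913424; -60049232;
  -24693040; 75922544; 62237712; -29575008; -36960448; 4194656; -16107696; -37758176; 21600688;
  77397328; 20239456; -64920576; -29371136; 39839344; 4117744; -52668416; 2264880; 84055264;
  30521088; -81905616; -58256432; 53396848; 53404928; -41447312; -44498672; 49884352; 57749168;
  -46207680; -75946432; 21402912; 73840752; -755552; -59365536; -2915312; 53046560; 4192992;
  -55084016; -15997392; 49324064; 27890672; -35016800; -29892928; 22839904; 25684208; -18116720;
  -24900992; 13773168; 26133968; -6193008; -23874224; -785840; 18078944; 3401472; -13338016;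
  -3780864; 10883456; 4799792; -8548112; -6044720; 5299552; 5832128; -2555120; -4494240; 1228624;
  3387568; -606288; -2789600; -40368; 2178048; 603120; -1357904; -715120; 715120; 553280; -392944;
  -407824; 235472; 346432; -85008; -262944; -25168; 148976; 54608; -63728; -36624; 29920; 22960;
  -16864; -19216; 5280; 14192; 3184; -5936; -4304; 448; 1808; 672; -240; -304; -112; -16]); (ncons
  86%N 0 [:: 8; 48; 80; -88; -408; -112; 1040; 976; -1768; -2832; 2472; 6096; -3848; -13656; 4048;
  29536; 4472; -52864; -31160; 74352; 77040; -87104; -138808; 97200; 234760; -96616; -398368; 29368;
  616952; 166088; -825864; -500776; 972104; 939040; -1083224; -1542072; 1109504; 2427528; -830160;
  -3563680; 31920; 4708728; 1312752; -5625672; -3162456; 6319384; 5682000; -6737128; -9097928;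
  6232912; 13167672; -4135088; -17595344; 183688; 21821632; 5179224; -25380880; -12384280; 27714696;
  22392376; -28254600; -34751704; 25864152; 47859552; -18665448; -60972896; 6293376; 73974032;
  9355168; -85899200; -30029872; 92616304; 57392352; -93996184; -90952032; 88050832; 123848368;
  -73085936; -154783232; 48045336; 188084280; -12056992; -218988360; -32902488; 238952256; 90311216;
  -241921648; -154514080; 234175792; 219798744; -217322640; -287511504; 179549152; 352066880;
  -115006056; -410848976; 33166800; 452074384; 51022080; -468156240; -146279544; 472890928;
  263534736; -454871424; -379702792; 403019768; 477454240; -318267200; -562550168; 212365528;
  634748648; -112885272; -694480192; -37025304; 705233864; 189626008; -694350784; -332891464;
  628938192; 466575384; -562190112; -585369912; 471059856; 699088472; -307466184; -774402216;
  166454984; 812690424; 310120; -794836760; -141927664; 787408752; 306425224; -721707256;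
  -459073648; 623825440; 565527656; -489898120; -646111272; 353879424; 699639008; -233909728;
  -733347432; 68507032; 722524168; 77569328; -675035216; -204145976; 595757176; 295605992;
  -521170840; -378529984; 421458904; 447631184; -307714608; -477540352; 188523120; 469046024;
  -87815664; -448005512; 4476104; 417502888; 78194960; -368809368; -146875456; 300536024; 190157528;
  -228113696; -207686552; 168550144; 216585504; -110336424; -216694048; 53419040; 202765536;
  -2730264; -172991016; -30302512; 142084144; 51353952; -114273928; -67111032; 86202320; 76957192;
  -56133872; -76893384; 29776176; 68768680; -11985808; -59481568; -827488; 50399096; 11361992;
  -39989168; -18754264; 28051856; 20953280; -17938048; -19898344; 10820744; 18069728; -5528520;
  -16110296; 833288; 12987504; 2287552; -9422368; -3640456; 6351608; 3771752; -4310504; -3753880;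
  2611352; 3464008; -1192384; -2828240; 216448; 1998896; 190536; -1374096; -355856; 930680; 428120;
  -590480; -449504; 281304; 347952; -108920; -238024; 25328; 148856; 1512; -102272; -26232; 57072;
  30480; -24976; -23576; 6328; 11816; -2136; -6920; -200; 3640; 816; -2032; -1480; 128; 552; 120;
  -184; -160; -56; -8]); (ncons 98%N 0 [:: -16; -80; -80; 240; 528; -176; -1280; -512; 1824; 1696;
  -2016; -2688; 3760; 6064; -6320; -17312; -528; 32128; 25920; -29968; -55280; 1168; 63328; 23088;
  -70000; -21584; 131056; 77520; -202720; -280112; 138736; 515056; 93232; -551696; -315968; 482384;
  448880; -692480; -766352; 1021008; 1521952; -647184; -2434816; -508240; 2911456; 1388848;
  -2788320; -1754160; 2828656; 3143280; -3483536; -6008704; 3266480; 8366800; -341840; -9334816;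
  -3807600; 10408080; 5948016; -11712000; -7617520; 11699376; 14188912; -10028512; -23658880;
  6883200; 28226096; 257792; -28013456; -10070800; 31172640; 16951968; -37627232; -24556928;
  37649024; 41223024; -28207840; -60595680; 15278192; 68607696; -3976000; -68538192; -6467680;
  77747184; 24984448; -93670496; -57130288; 90818864; 87225104; -66467216; -102202816; 41787008;
  111774160; -37233232; -139045632; 27340656; 168106560; 28751248; -166486464; -88432448; 149958112;
  109294112; -126359216; -110593424; 133321888; 161296256; -118457776; -224801216; 51397648;
  242578208; 9427344; -213197584; -37226240; 196336688; 47009456; -243381152; -115717168; 236321568;
  190377728; -166188336; -220209904; 91474848; 200959248; -88949152; -211722816; 89371232;
  263993696; -7377200; -270793120; -81501216; 214877568; 107970944; -161253984; -82162960;
  171061136; 113829856; -166539520; -180862752; 105332416; 195024720; -26821360; -143217600;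
  11846352; 116182192; -23409376; -139729168; -6835328; 144898400; 62575360; -92035456; -77324912;
  39300544; 44924224; -38933680; -34758784; 48016272; 56351520; -23379552; -63777104; -17301360;
  31320432; 20850960; -4070192; -1801472; 6784080; -1446832; -15813536; -15400704; 832928; 17454112;
  18618880; 216736; -18299776; -12951520; 6098512; 8866176; -4052224; -4152304; 11318368; 11490928;
  -10081056; -18752256; 819776; 16910688; 5587168; -10100976; -3835584; 8866768; 2983296; -10223248;
  -6101664; 8510256; 9030256; -3719824; -7784256; 972944; 5407008; -764496; -4687776; 476144;
  4834352; 1041248; -3790176; -2066656; 2087280; 1829968; -1092544; -1283376; 823264; 1146112;
  -555056; -1164928; 52560; 862192; 228864; -471136; -224272; 245008; 140256; -183552; -140720;
  113456; 145168; -25664; -101456; -22032; 43312; 18496; -17616; -8432; 12096; 7600; -7536; -8896;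
  480; 5392; 2624; -1040; -1552; -368; 352; 320; 112; 16])].
Definition S_2mod4 : zpoly :=
  [:: 16; 32; 16; -32; 32; 192; 208; -96; 0; 704; 960; -320; -960; 1632; 3952; 992; -3984; 992;
  9168; 7104; -9984; -2112; 18640; 28832; -17056; -17216; 21104; 77952; -7568; -35712; 5872; 162080;
  37344; -73376; -55760; 259488; 200976; -82912; -161248; 284992; 513968; -70688; -229280; 111360;
  1174832; 69952; -111728; -484192; 2087120; 366336; 558416; -1478656; 3151456; 1265504; 1451424;
  -2413952; 3550320; 2697856; 3922928; -3705184; 4030896; 4529504; 6693872; -2175648; 1621088;
  9077376; 9903280; 3347968; -3335712; 17681312; 7932800; 21124000; -15747232; 32136544; 4937472;
  43439968; -28909056; 55673792; -20826048; 107290656; -83932464; 128437440; -91795184; 206789408;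
  -148994832; 199107072; -133134256; 240206944; -78434592; 74619456; 95064832; -58430976; 348800800;
  -353727520; 532227120; -414508768; 638712416; -417936096; 385749440; 5909664; -7259888; 535541056;
  -666147680; 1033542624; -708445696; 764036352; 10396016; -678832288; 2295867920; -3366855232;
  5410896224; -6859423936; 8973596544; -9656223936; 10850982704; -10195878080; 9550623024;
  -6269371264; 3304214416; 2278806528; -7343271696; 14817666720; -20338214256; 27473432128;
  -31597044592; 36414584640; -36455957904; 36682518848; -31655043888; 26800223200; -16378911472;
  7450486176; 5834980800; -16184629920; 29628349024; -37832489856; 47445251984; -50633429184;
  54355223808; -50633429184; 47445251984; -37832489856; 29628349024; -16184629920; 5834980800;
  7450486176; -16378911472; 26800223200; -31655043888; 36682518848; -36455957904; 36414584640;
  -31597044592; 27473432128; -20338214256; 14817666720; -7343271696; 2278806528; 3304214416;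
  -6269371264; 9550623024; -10195878080; 10850982704; -9656223936; 8973596544; -6859423936;
  5410896224; -3366855232; 2295867920; -678832288; 10396016; 764036352; -708445696; 1033542624;
  -666147680; 535541056; -7259888; 5909664; 385749440; -417936096; 638712416; -414508768; 532227120;
  -353727520; 348800800; -58430976; 95064832; 74619456; -78434592; 240206944; -133134256; 199107072;
  -148994832; 206789408; -91795184; 128437440; -83932464; 107290656; -20826048; 55673792; -28909056;
  43439968; 4937472; 32136544; -15747232; 21124000; 7932800; 17681312; -3335712; 3347968; 9903280;
  9077376; 1621088; -2175648; 6693872; 4529504; 4030896; -3705184; 3922928; 2697856; 3550320;
  -2413952; 1451424; 1265504; 3151456; -1478656; 558416; 366336; 2087120; -484192; -111728; 69952;
  1174832; 111360; -229280; -70688; 513968; 284992; -161248; -82912; 200976; 259488; -55760; -73376;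
  37344; 162080; 5872; -35712; -7568; 77952; 21104; -17216; -17056; 28832; 18640; -2112; -9984;
  7104; 9168; 992; -3984; 992; 3952; 1632; -960; -320; 960; 704; 0; -96; 208; 192; 32; -32; 16; 32;
  16].
Definition elimU_0mod4 : seq zpoly :=
  [:: (ncons 40%N 0 [:: -8; 8; 48; -56; -112; 168; 176; -352; -248; 640; 472; -1168; -888; 2136;
  704; -3144; -888; 4728; 1088; -6912; -2752; 10640; 1000; -14296; 1456; 18152; 1264; -23880; -1008;
  31248; 1040; -41704; 15648; 49096; -8024; -55824; 4872; 65464; -19192; -83640; 31880; 97896;
  -54040; -97904; 17704; 97832; -53832; -122288; 80760; 145768; -82536; -128304; 88808; 112504;
  -59808; -128288; 140888; 164336; -120136; -139480; 111552; 88496; -119608; -112976; 116424;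
  134968; -165504; -121272; 107616; 60584; -121632; -58024; 117880; 102464; -114992; -65960; 115344;
  36944; -79768; -19608; 89328; 45848; -73696; -40392; 69840; 2112; -54904; -11016; 43592; 10440;
  -40160; -15208; 32528; -832; -26376; 2256; 18176; 4840; -15536; -64; 11920; -40; -9048; 2528;
  5632; 576; -4392; 400; 3176; -856; -2024; 480; 1256; -328; -784; 120; 568; -296; -272; 112; 144;
  -72; -64; 32; 32; -24; -8; 8]); (ncons 52%N 0 [:: 16; -16; -96; 96; 224; -224; -336; 352; 400;
  -448; -768; 672; 1744; -1360; -1696; 1328; 1904; -1680; -1648; 752; 6480; -1664; -6944; 1376;
  4336; 64; -6608; -2912; 12944; 3920; -26096; -4832; 12864; 7120; -14912; -14032; 34032; 19552;
  -43872; -13200; 48016; 23712; -20080; -28816; 56064; 34592; -76032; -32848; 63120; 25344; -57968;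
  -51904; 51136; 38592; -102160; -35408; 81888; 37440; -63088; -35936; 71072; 47088; -80576; -17024;
  90544; 30192; -57776; -28288; 59120; 18672; -64880; -16544; 59520; 7824; -46080; -18128; 38192;
  4304; -38096; -3840; 32800; 4240; -24592; -3776; 19776; 944; -18016; 1776; 13024; 1248; -10096;
  208; 7520; -752; -6128; 1328; 3952; -48; -2800; 496; 2048; -528; -1360; 400; 816; -176; -528; 160;
  352; -192; -160; 64; 80; -48; -32; 16; 16; -16]); (ncons 54%N 0 [:: 8; -8; -56; 56; 160; -152;
  -296; 256; 472; -408; -840; 768; 1640; -1512; -2280; 1912; 2968; -2344; -4328; 4248; 6952; -6472;
  -9248; 8528; 9112; -6880; -11552; 12968; 18248; -19872; -21512; 21120; 20672; -21368; -17056;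
  19056; 30760; -46648; -37752; 38936; 26552; -34168; -20168; 38400; 30568; -47800; -48888; 77784;
  25152; -29304; -10416; 48640; 22952; -57776; -42448; 63240; 21600; -59752; 7296; 17264; 16880;
  -65400; -23664; 46432; 16432; -42344; 13176; 28912; 3144; -24120; -19128; 45656; -1520; -16472;
  2832; 21696; -6040; -13856; -9704; 17584; -1064; -13872; 5840; 5192; 704; -9248; 440; 4632; 1008;
  -5544; 3328; 2104; 320; -2264; 184; 1832; -504; -952; 400; 760; -288; -328; -80; 384; -200; -144;
  48; 96; -48; -40; 8; 24; -16; -8; 8]); (ncons 66%N 0 [:: -16; 16; 96; -96; -208; 192; 256; -192;
  -224; 176; 368; -368; -1056; 1104; 608; -528; -112; -240; -512; -528; -464; 96; 1088; -2400; 4688;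
  -5792; -2416; 1056; 4256; -1120; -1696; 6208; 7584; -2448; -14096; 18288; 1920; 1008; -14080;
  14688; 8512; -16688; -18848; 9856; 13472; -26288; -6224; 4288; 24880; -30576; -6224; 14288; 18976;
  -17936; -8112; 24848; 11584; -10320; -13856; 24576; 784; -9104; -14256; 18992; 2224; -11760;
  -6160; 9264; 2480; -11008; -3232; 7024; 4176; -8432; 928; 3520; 1824; -5088; -512; 3088; 1104;
  -2992; 704; 1488; 272; -1472; -144; 1008; 0; -672; 224; 432; -32; -256; -16; 240; -112; -80; 32;
  64; -32; -16; 0; 16; -16])].
Definition elimV_0mod4 : seq zpoly :=
  [:: (ncons 40%N 0 [:: -8; -8; 48; 56; -112; -168; 176; 352; -248; -640; 472; 1168; -888; -2136;
  704; 3144; -888; -4728; 1088; 6912; -2752; -10640; 1000; 14296; 1456; -18152; 1264; 23880; -1008;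
  -31248; 1040; 41704; 15648; -49096; -8024; 55824; 4872; -65464; -19192; 83640; 31880; -97896;
  -54040; 97904; 17704; -97832; -53832; 122288; 80760; -145768; -82536; 128304; 88808; -112504;
  -59808; 128288; 140888; -164336; -120136; 139480; 111552; -88496; -119608; 112976; 116424;
  -134968; -165504; 121272; 107616; -60584; -121632; 58024; 117880; -102464; -114992; 65960; 115344;
  -36944; -79768; 19608; 89328; -45848; -73696; 40392; 69840; -2112; -54904; 11016; 43592; -10440;
  -40160; 15208; 32528; 832; -26376; -2256; 18176; -4840; -15536; 64; 11920; 40; -9048; -2528; 5632;
  -576; -4392; -400; 3176; 856; -2024; -480; 1256; 328; -784; -120; 568; 296; -272; -112; 144; 72;
  -64; -32; 32; 24; -8; -8]); (ncons 52%N 0 [:: 16; 16; -96; -96; 224; 224; -336; -352; 400; 448;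
  -768; -672; 1744; 1360; -1696; -1328; 1904; 1680; -1648; -752; 6480; 1664; -6944; -1376; 4336;
  -64; -6608; 2912; 12944; -3920; -26096; 4832; 12864; -7120; -14912; 14032; 34032; -19552; -43872;
  13200; 48016; -23712; -20080; 28816; 56064; -34592; -76032; 32848; 63120; -25344; -57968; 51904;
  51136; -38592; -102160; 35408; 81888; -37440; -63088; 35936; 71072; -47088; -80576; 17024; 90544;
  -30192; -57776; 28288; 59120; -18672; -64880; 16544; 59520; -7824; -46080; 18128; 38192; -4304;
  -38096; 3840; 32800; -4240; -24592; 3776; 19776; -944; -18016; -1776; 13024; -1248; -10096; -208;
  7520; 752; -6128; -1328; 3952; 48; -2800; -496; 2048; 528; -1360; -400; 816; 176; -528; -160; 352;
  192; -160; -64; 80; 48; -32; -16; 16; 16]); (ncons 54%N 0 [:: 8; 8; -56; -56; 160; 152; -296;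
  -256; 472; 408; -840; -768; 1640; 1512; -2280; -1912; 2968; 2344; -4328; -4248; 6952; 6472; -9248;
  -8528; 9112; 6880; -11552; -12968; 18248; 19872; -21512; -21120; 20672; 21368; -17056; -19056;
  30760; 46648; -37752; -38936; 26552; 34168; -20168; -38400; 30568; 47800; -48888; -77784; 25152;
  29304; -10416; -48640; 22952; 57776; -42448; -63240; 21600; 59752; 7296; -17264; 16880; 65400;
  -23664; -46432; 16432; 42344; 13176; -28912; 3144; 24120; -19128; -45656; -1520; 16472; 2832;
  -21696; -6040; 13856; -9704; -17584; -1064; 13872; 5840; -5192; 704; 9248; 440; -4632; 1008; 5544;
  3328; -2104; 320; 2264; 184; -1832; -504; 952; 400; -760; -288; 328; -80; -384; -200; 144; 48;
  -96; -48; 40; 8; -24; -16; 8; 8]); (ncons 66%N 0 [:: -16; -16; 96; 96; -208; -192; 256; 192; -224;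
  -176; 368; 368; -1056; -1104; 608; 528; -112; 240; -512; 528; -464; -96; 1088; 2400; 4688; 5792;
  -2416; -1056; 4256; 1120; -1696; -6208; 7584; 2448; -14096; -18288; 1920; -1008; -14080; -14688;
  8512; 16688; -18848; -9856; 13472; 26288; -6224; -4288; 24880; 30576; -6224; -14288; 18976; 17936;
  -8112; -24848; 11584; 10320; -13856; -24576; 784; 9104; -14256; -18992; 2224; 11760; -6160; -9264;
  2480; 11008; -3232; -7024; 4176; 8432; 928; -3520; 1824; 5088; -512; -3088; 1104; 2992; 704;
  -1488; 272; 1472; -144; -1008; 0; 672; 224; -432; -32; 256; -16; -240; -112; 80; 32; -64; -32; 16;
  0; -16; -16])].
Definition S_0mod4 : zpoly :=
  [:: 16; -64; 96; -224; 400; -928; 1296; -1088; 4704; -2432; 11776; 1152; 25952; -11008; 25920;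
  -34848; 8240; -142656; -70240; -220608; -73808; -308576; 18672; -74368; 369664; 60640; 608032;
  290496; 615760; -202848; 180976; -492480; -204512; -972992; -204512; -492480; 180976; -202848;
  615760; 290496; 608032; 60640; 369664; -74368; 18672; -308576; -73808; -220608; -70240; -142656;
  8240; -34848; 25920; -11008; 25952; 1152; 11776; -2432; 4704; -1088; 1296; -928; 400; -224; 96;
  -64; 16].
Definition bezU_odd : zpoly :=
  [:: -46; 42; 22; 45; 39; 28; 35; 4; -21; 23; -25; 3; -50; -4; -36; -41; 39; -14; 3; 48; -19; 38;
  -16; 18; -6; -40; 4; -13; -45; -42; 6; -25; -49; 2; 7; -10; 18; 50; 0; 29; 18; 2; -19; 8; 38; 6;
  12; 25; 46; 9; -39; -31; -22; 49; 11; 15; 39; -13; -47; 5; -32; -21; 29; 21; 3; 25; 3; -19; 10;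
  -15; -12; -8; -26; 39; -22; -21; -25; -43; -10; 41; -9; 50; 12; 42; -3; 9; 24; -48; 14; 20; -3;
  50; 31; 9; 22; -31; -32; -33; -8; 47; 31; -21; -8; 50; -13; -6; -14; 38; 13; -46; -27; -23; -48;
  -23; 27; 16; 44; 19; -7; 44; -25; 4; 5; 29; 43; 36; 26; 22; -16; 10; -22; 16; -41; -11; -42; 16;
  -38; -44; -9; -24; -45; 29; -21; 38; -14; -44; 8; -2; 20; -30; -24; 25; -36; -16; -12; -42; 2;
  -35; -11; 40; 23; -17; 49; 28; 30; -31; 24; -42; 40; 28; 39; -29; -31; -39; -10; 47; 28; 38; 7;
  36; 0; -10; -20; 44; -48; 22; 32; -14; -50; 35; 11; 22; 40; -42; 9; 8; 6; 28; 49; 46; 33; 6; -20;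
  -39; -2; -22; -24; 7; -27; 45; -44; 41; 7; 28; -33; -21; -26; 37; 17; 40; 42; -17; 35; 22; -6;
  -17; 21; -43; -50; 45; 39; 30; -39; 8; 4; 11; 42; 9; 48; 38; -3; -26; 0; -15; 29; 35; 4; -8; -23;
  -4; -29; 38; -10; -16; 16; 13; 30; -29; -30; -20; 25; 8; 9; 1; 9; 8; 24; -21; -13; -11; -37; -7;
  -10; -3; 35; -23; -2; -29; 17; -42; 14; -16; -14; -43; -24; 37; 18; -28; -32; -48; -50; -17; -9;
  22; -12; 37; 50; 40; 4; -24; 2; -45; -23; -47; 30; 19; 0; 9; -11; -25; 25; -33; -46; -9; 20; -4;
  -11; 5; -4; -46; -12; -47; 14; -45; -36; 17; -39; 22; -47; 29; -7; 50; 41; 1; 37; 46; -28; 30; -2;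
  21; -42; 42; -49; 28; -9; 19; -24; 14; -49; -25; -34; -35; -25; -3; 42; 41; 36; -13; -42; 45; 44;
  -50; -5; -16; 17; -9; -29; -37; -15; 18; 9; 9; -4; -41; 46; -20; 31; 7; -41; -42; 25; 45; -42;
  -38; 42; 32; 21; -25; 3; -40; 26; -33; 40; 25; -31; -20; 26; 29; 19; -45; -19; -32; -14; 33; -20;
  -11; 19; -41; -45; -32; -26; 4; 22; 22; -32; -4; 6; 49; 42; -21; 0; -46; 29; -44; 1; 41; 32; 34;
  -13; -25; 6; 32; -47; -40; 21; -15; 38; 12; -31; -21; 5; -27; 49; 14; 23; 35; 8; 36; 1; 49; -35;
  -26; -39; 20; -17; -50; -12; -40; -22; -44; 24; 10; 40; 24; -1; -27; 26; 12; -33; -17; 6; -32;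
  -24; 39; 40; -4; 19; 4; 50; -4; 18; -27; -29; 24; -15; 32; 2; 8; 38; 37; -21; -33; 10; 5; 40; -44;
  4; 38; 28; -25; 2; -47; -38; -1; -44; -20; -42; -25; -16; -47; -48; -10; -49; 5; -32; 37; 17; 47;
  32; 4; 11; -50; -8; -15; 16; -30; -26; -4; 31; 16; -28; 25; -46; 36; -15; -23; 5; -49; 25; -25;
  28; 5; -7; -40].
Definition bezV_odd : zpoly :=
  [:: -36; 32; -1; 12; 1; 42; -8; -20; -7; 26; -29; -6; -4; -6; 7; 0; 48; -45; 0; 5; -24; -18; -35;
  -45; 13; 25; -46; -4; 22; -49; 27; -9; -16; -11; -45; -5; -23; 5; -46; 27; 45; -45; -46; 25; 42;
  -11; 44; -36; 30; 31; 38; -35; -9; -16; 33; 9; 35; -3; -28; 23; -14; 40; -38; -5; -35; 13; 38; 3;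
  28; -35; 12; 5; 34; -50; -45; 16; -37; -31; 26; -25; 10; 9; 44; -16; 31; -30; -27; -9; -10; -2;
  10; 17; 16; 19; -17; 28; 5; -21; -23; -33; 35; 17; 18; 36; -6; -14; -21; -43; 28; 45; 19; 43; -41;
  45; -19; 14; 45; -27; -31; 40; 17; -42; -33; 17; 26; 1; 14; 24; -18; -39; 16; 4; -8; 37; 19; 34;
  -16; 28; 25; 19; 20; -41; -43; -44; -11; -47; 44; -32; -32; 17; -40; 27; -17; 42; 12; 20; -48; 26;
  30; -21; 6; 9; 32; -34; 19; 42; 16; -46; 17; -47; 21; 19; -19; 1; -3; 8; 32; 37; -46; 31; 41; -38;
  8; 8; -49; -32; 45; 28; 46; -29; -44; -23; -46; 24; 44; -40; 46; -17; -10; 31; -9; 48; 24; -17;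
  -26; 38; -11; -7; -16; 19; -10; -48; 38; -27; 14; 2; -31; -13; -39; -31; -16; -39; 28; 43; 0; -49;
  36; -2; 37; 19; 45; 19; 30; -7; -5; -34; -32; 34; 32; -12; -47; -4; 38; 13; 5; -42; 6; -44; -39;
  46; -13; -48; 37; -44; -19; -48; -34; -46; -35; -28; 39; 12; -14; 47; 2; -6; 47; 17; 39; 31; 45;
  40].
Definition bezU_2mod4 : zpoly :=
  [:: 50; -16; 17; 25; -9; 31; -9; -5; 35; -4; -8; -27; -7; -12; 14; -12; 34; 21; 17; -25; 24; -2;
  10; -29; 15; -35; -9; -3; -39; 31; -49; -42; 15; 12; -21; -40; -6; -38; 13; 35; -24; -1; -46; 13;
  43; -43; 50; 36; 21; 15; 8; -14; -42; 37; 28; 27; -39; 18; -25; 43; 18; -33; 43; 50; 5; 39; 38;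
  20; 18; 15; 4; 47; 19; 18; -16; 1; -28; 45; 48; 25; -8; -49; 11; -14; -5; 37; 35; -19; 39; -3;
  -31; 26; -9; -24; -7; -42; 38; -42; 10; -42; -44; -18; -27; -33; 12; 21; -40; 8; 30; 26; -2; 33;
  -37; 6; 16; -12; -27; 20; 15; -8; -49; -30; 34; -39; -46; -3; -34; -5; -48; -20; 9; 49; -14; -16;
  35; 31; 49; -37; -13; -36; 42; 22; 33; 16; -47; -35; -44; -1; 40; 35; 39; -42; 48; -25; -5; -25;
  22; 3; -10; 49; -45; 25; 35; -32; 24; 6; -37; -19; -26; 35; 47; -26; 30; -5; -30; 49; 18; -18; 9;
  -18; 24; 17; -44; 10; 20; -14; -31; 33; -13; -33; 44; 1; 23; 25; -39; -29; -8; 0; -35; -30; -12;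
  -6; 40; 32; 10; -18; -43; 11; 29; 34; 14; 19; 48; -25; 19; 49; -4; 29; 5; 10; 20; -19; -29; -29;
  -47; -20; -11; -35; -49; -12; -9; -6; -7; -1; 4; 38; 47; -14; -28; -26; 41; 23; 21; 5; 18; -40;
  -20; 15; 9; 10; -22; 23; 20; 26; -12; 36; -11; 32; 12; 7; -38; -22; 4; -7; -5; 20; 12; 3; -19;
  -42; 31; 3; -16; 20; 48; -23; 33; -45; -20; 19; -29; 41; -9; -36; -26; 48; -4; 33; -33; -50; -15;
  -22; 46; -35; 47; -2; 42; -38; 4; -43; 2; 12; 41; -23; 11; -2; -13; -8; 6; -1; 46; 0; 37; 19; 2;
  -49; 26; -7; 19; 32; 47; -32; 50; 37; 21; 35; 8; 39; 12; 7; 2; -34; -10; -47; -33; -32; 8; 38; 36;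
  -6; -41; -23; 21; 45; 31; -44; -23; -16; 9; 40; 31; 32; -19; -9; -31; -42; -36; 4; -25; 37; 25;
  -8; 13; -41; -42; -8; 15; 8; 13; 45; -23; -43; -45; 42; -9; -13; 41; 7; 2; 41; -5; 32; 41; 37; 45;
  36; 47; -14; -30; -2; -8; 14; 25; 32; 29; 9; 27; 11; -29; 24; 7; 39; 32; 7; 25; 48; -36; 30; 20;
  -14; -11; 2; -30; -36; -20; -6; -24; -11; -37; 38; 23; 30; -1; -19; -2; -36; 22; 13; -38; -45; 4;
  -15; -45; -29; -43; -5; -36; 4; -28; -1; 13; -7; -23; 44; -33; -44; 5; 1; -34; 23; -43; -11; 11;
  -44; 31; 24; -9; -14; -50; -29; -14; 0; -39; 40; 45; 25; 34; -39; 6; -17; -48; -21; -18; -43; -27;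
  -29; 0; -40; -37; -28; 23; 50; -26; -36; -13; 47; 47; -40; -16; -4; -13; -43; -48; -27; 42; -39;
  -23; -44; 2; 35; -33; -16; 43; 32; -4; 30; 19; 28; -37; 5; -17; 47; -15; -22; -11; 38; 3; 46; -3;
  6; -39; 5; 26; -35; -44; -29; -33; -33; -15; -1; -12; -33; -39; -16; -44; -44; -36; 32; 28; -42;
  0; -34; 29; -29; 0; 22; 36; -31; -5; -27; -36; 49].
Definition bezV_2mod4 : zpoly :=
  [:: -31; 17; 4; -10; -50; -3; -23; -4; 10; 50; -23; 11; 41; 32; -8; 28; 41; -15; 48; 49; -5; 5;
  41; 44; -48; 22; 1; 34; 42; 35; 32; 17; -34; 3; 44; -10; 33; 38; 33; 0; -39; 22; -29; 30; 7; 39;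
  -4; -19; 8; 3; -32; 48; -27; -20; 50; -28; -5; 42; 42; -7; -37; 33; 17; 11; -43; -30; -14; 12; 11;
  24; 49; 21; 9; -9; -35; -11; 45; -1; 32; -33; 9; -2; 10; 8; 3; -14; -45; 37; -44; 6; 23; -20; -4;
  14; -22; -23; 40; -38; 15; 36; -11; -49; -5; -27; -21; 40; -10; 16; -43; -29; 4; -5; -23; -40; 43;
  -13; 35; -10; 31; -50; 32; -40; 0; -41; -29; -47; -5; 37; -2; -6; 23; -8; 6; 27; -34; -3; -14;
  -50; -41; 11; -7; -30; -11; 0; 0; 47; 14; -50; -32; -20; 47; -41; -1; -45; 23; 20; -48; -15; 14;
  16; -12; -27; 1; -23; -10; 47; -25; -36; -32; -35; -20; 19; 35; -39; -48; -19; -8; 32; 40; -18;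
  -50; -45; 17; 28; 45; -25; 50; 6; 29; 35; -43; 49; 7; 44; -50; -43; -16; -27; -11; 4; -39; 16; 41;
  25; -49; 17; 44; -34; 31; -4; -47; -5; -1; -25; 14; -30; 34; -18; 5; -38; 6; 24; 23; -48; -49; 22;
  -43; 33; 36; -9; -22; 30; 37; -24; 0; -27; -14; -48; 48; 5; -7; -41; 10; -3; 33; 12; -46; -6; 40;
  29; -21; 32; 22; 8; 40; -5; 4; 13; -42; 7; -23; 15; -32; 5; -41; -4; 16; 28; 28; 28; -36; -48;
  -32; -48; 39; -49].
Definition bezU_4mod8 : zpoly :=
  [:: 4; -21; 12; 24; 13; 28; -33; 37; -25; -46; 41; 15; -44; 18; -17; 9; 38; 46; -47; 44; -5; 5; 0;
  -10; 34; 4; -21; -31; 17; -37; 40; -29; -28; -16; 18; 49; -38; 28; -16; -17; 5; -28; -21; -39;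
  -12; -3; 22; -23; -1; -31; 27; 38; -14; -44; 42; 16; 21; -5; 7; -38; -6; -20; 39; 14; -34; -50; 8;
  38; -1; -40; -5; -3; -44; 39; -21; -38; 28; 12; 11; 48; -34; -50; -50; 31; -6; 2; -32; -39; 20;
  49; 43; 28; -27; -20; -49; -16; 42; 37; -48; -24; -24; -9; -17; 32; 27; -18; 36; 49; -44; 13; -47;
  -7; 20; -48; -17; 2; 21; 6; -41; -21; 19; -38; 35; -27; -19; -39; 20; -20; -11; 38; 41; -4].
Definition bezV_4mod8 : zpoly :=
  [:: 15; 37; 22; -43; 45; 48; -42; 48; -6; 26; 12; 17; 44; 39; -41; -34; 49; -49; -35; -18; -33;
  -45; -3; -7; 12; -5; 5; -27; 5; -36; -29; 17; 35; -38; -14; -20; 7; -46; -2; 25; -35; 19; -3; -44;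
  -24; -23; 32; 38; 1; -48; -24; 3; -10; 0; -18; 22; 8; 9; -12; 14; 35; -37; -12; 33; 44; 4].
Definition bezU_0mod8 : zpoly :=
  [:: -41; 45; 22; -21; 25; 46; -30; 13; 43; -16; -28; 46; -22; -33; -42; -47; -13; -39; 9; -40;
  -47; 6; -7; -11; -9; 43; 21; 21; -3; 46; -42; -47; -10; 18; 43; -50; -41; -29; -36; 45; 35; 0;
  -45; -47; 2; -13; 12; 35; 18; -32; -43; 41; -18; -17; 21; 36; -13; 21; -3; 23; -30; 5; 2; 31; -32;
  -8].
Definition bezV_0mod8 : zpoly :=
  [:: -41; -45; 22; 21; 25; -46; -30; -13; 43; 16; -28; -46; -22; 33; -42; 47; -13; 39; 9; 40; -47;
  -6; -7; 11; -9; -43; 21; -21; -3; -46; -42; 47; -10; -18; 43; 50; -41; 29; -36; -45; 35; 0; -45;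
  47; 2; 13; 12; -35; 18; 32; -43; -41; -18; 17; 21; -36; -13; -21; -3; -23; -30; -5; 2; -31; -32;
  8].

Lemma elim_odd : elim_identity Tbiv (zp2_comp_sqr Tbiv) elimU_odd elimV_odd 76 4 4 S_odd.
Proof. by vm_compute. Qed.
Lemma elim_2mod4 :
  elim_identity Tbiv (zp2_comp_oppsqr Tbiv) elimU_2mod4 elimV_2mod4 72 4 8 S_2mod4.
Proof. by vm_compute. Qed.
Lemma elim_0mod4 :
  elim_identity Tbiv (zp2_comp_opp Tbiv) elimU_0mod4 elimV_0mod4 40 2 2 (zp_comp_sqr S_0mod4).
Proof. by vm_compute. Qed.

Lemma coprime_odd : coprime_mod 101 S_odd (zp_comp_sqr S_odd) bezU_odd bezV_odd.
Proof. by vm_compute. Qed.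
Lemma coprime_2mod4 :
  coprime_mod 101 S_2mod4 (zp_comp_sqr (zp_comp_opp S_2mod4)) bezU_2mod4 bezV_2mod4.
Proof. by vm_compute. Qed.
Lemma coprime_4mod8 :
  coprime_mod 101 S_0mod4 (zp_comp_sqr (zp_comp_opp S_0mod4)) bezU_4mod8 bezV_4mod8.
Proof. by vm_compute. Qed.
Lemma coprime_0mod8 : coprime_mod 101 S_0mod4 (zp_comp_opp S_0mod4) bezU_0mod8 bezV_0mod8.
Proof. by vm_compute. Qed.

End Certificates.

Lemma expr_opp_double (R : pzRingType) (x : R) t : (- x) ^+ (2 * t) = x ^+ (2 * t).
Proof. by rewrite !exprM sqrrN. Qed.

Lemma S_odd_root t n (z : algC) : odd n -> (2 < n)%N ->
  'Phi_n %| Tpoly t -> n.-primitive_root z -> zp_eval z S_odd = 0.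
Proof.
move=> odd_n n_gt2 dvdT prim_z.
apply: (elim_identity_root elim_odd (Tbiv_prim_root dvdT prim_z)).
  rewrite zp2_eval_comp_sqr exprAC.
  exact: Tbiv_prim_root dvdT (prim_root_sqr odd_n prim_z).
exact: prim_root_nondegenerate n_gt2 prim_z.
Qed.

Lemma S_2mod4_root t m (z : algC) : odd m -> (1 < m)%N ->
  'Phi_(2 * m) %| Tpoly t -> (2 * m).-primitive_root z -> zp_eval z S_2mod4 = 0.
Proof.
move=> odd_m m_gt1 dvdT prim_z.
apply: (elim_identity_root elim_2mod4 (Tbiv_prim_root dvdT prim_z)).
  rewrite zp2_eval_comp_oppsqr exprAC -expr_opp_double.
  exact: Tbiv_prim_root dvdT (prim_root_opp_sqr odd_m prim_z).
by apply: prim_root_nondegenerate prim_z; lia.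
Qed.

Lemma S_0mod4_root t m (w : algC) : ~~ odd m -> (0 < m)%N ->
  'Phi_(2 * m) %| Tpoly t -> m.-primitive_root w -> zp_eval w S_0mod4 = 0.
Proof.
move=> even_m m_gt0 dvdT prim_w.
have m_gt1 : (1 < m)%N by case: m even_m m_gt0 {dvdT prim_w} => [|[|]].
have [z prim_z] := @C_prim_root_exists (2 * m) ltac:(lia).
have [u prim_u ->] := prim_root_sqr_surj even_m prim_z prim_w.
rewrite -zp_eval_comp_sqr.
apply: (elim_identity_root elim_0mod4 (Tbiv_prim_root dvdT prim_u)).
  rewrite zp2_eval_comp_opp -expr_opp_double.
  exact: Tbiv_prim_root dvdT (prim_root_opp even_m prim_u).
by apply: prim_root_nondegenerate prim_u; lia.
Qed.

Lemma not_dvd_odd t n : odd n -> (2 < n)%N -> ~~ ('Phi_n %| Tpoly t).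
Proof.
move=> odd_n n_gt2; apply/negP => dvdT.
have [z prim_z] := @C_prim_root_exists n ltac:(lia).
apply: (coprime_mod_no_common_root _ coprime_odd (Aint_prim_root prim_z)) => //.
  exact: S_odd_root odd_n n_gt2 dvdT prim_z.
rewrite zp_eval_comp_sqr.
exact: S_odd_root odd_n n_gt2 dvdT (prim_root_sqr odd_n prim_z).
Qed.

Lemma not_dvd_2mod4 t m : odd m -> (1 < m)%N -> ~~ ('Phi_(2 * m) %| Tpoly t).
Proof.
move=> odd_m m_gt1; apply/negP => dvdT.
have [z prim_z] := @C_prim_root_exists (2 * m) ltac:(lia).
apply: (coprime_mod_no_common_root _ coprime_2mod4 (Aint_prim_root prim_z)) => //.
  exact: S_2mod4_root odd_m m_gt1 dvdT prim_z.
rewrite zp_eval_comp_sqr zp_eval_comp_opp.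
exact: S_2mod4_root odd_m m_gt1 dvdT (prim_root_opp_sqr odd_m prim_z).
Qed.

Lemma not_dvd_4mod8 t k : odd k -> ~~ ('Phi_(2 * (2 * k)) %| Tpoly t).
Proof.
move=> odd_k; apply/negP => dvdT.
have k_gt0 : (0 < k)%N by case: k odd_k {dvdT}.
have even_2k : ~~ odd (2 * k) by rewrite oddM.
have k2_gt0 : (0 < 2 * k)%N by lia.
have [w prim_w] := C_prim_root_exists k2_gt0.
apply: (coprime_mod_no_common_root _ coprime_4mod8 (Aint_prim_root prim_w)) => //.
  exact: S_0mod4_root even_2k k2_gt0 dvdT prim_w.
rewrite zp_eval_comp_sqr zp_eval_comp_opp.
exact: S_0mod4_root even_2k k2_gt0 dvdT (prim_root_opp_sqr odd_k prim_w).
Qed.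

Lemma not_dvd_0mod8 t k : ~~ odd k -> (0 < k)%N -> ~~ ('Phi_(2 * (2 * k)) %| Tpoly t).
Proof.
move=> even_k k_gt0; apply/negP => dvdT.
have even_2k : ~~ odd (2 * k) by rewrite oddM.
have k2_gt0 : (0 < 2 * k)%N by lia.
have [w prim_w] := C_prim_root_exists k2_gt0.
apply: (coprime_mod_no_common_root _ coprime_0mod8 (Aint_prim_root prim_w)) => //.
  exact: S_0mod4_root even_2k k2_gt0 dvdT prim_w.
rewrite zp_eval_comp_opp.
exact: S_0mod4_root even_2k k2_gt0 dvdT (prim_root_opp even_k prim_w).
Qed.

Theorem mainTheorem8 (t b : nat) : (3 <= b)%N -> ~~ ('Phi_b %| Tpoly t).
Proof.
move=> b_gt2; have [odd_b | even_b] := boolP (odd b); first exact: not_dvd_odd.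
rewrite -(even_halfK even_b) -mul2n in b_gt2 *.
have [odd_m | even_m] := boolP (odd b./2); first by apply: not_dvd_2mod4; lia.
rewrite -(even_halfK even_m) -mul2n in b_gt2 *.
have [odd_k | even_k] := boolP (odd b./2./2); first exact: not_dvd_4mod8.
by apply: not_dvd_0mod8; lia.
Qed.
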